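(* Let $\phi:\mathbb R^3\to\mathbb C$ be a separately continuous function admitting a factorization $\phi(s,t,u)=\langle\alpha(s),\theta(t)\beta(u)\rangle$ for all $(s,t,u)\in\mathbb R^3$, where $E,F$ are Hilbert spaces (not necessarily separable) and $\alpha:\mathbb R\to E$, $\theta:\mathbb R\to\mathcal B(F,E)$, $\beta:\mathbb R\to F$ satisfy $\sup_s\|\alpha(s)\|\le1$, $\sup_t\|\theta(t)\|\le1$, $\sup_u\|\beta(u)\|\le1$ (equivalently, $\|\phi\|_{(\ell^1_{\mathbb R}\otimes_h\ell^1_{\mathbb R}\otimes_h\ell^1_{\mathbb R})^*}\le1$). Then there exist continuous functions $\alpha_m,\beta_n,\theta_{m,n}\in C(\mathbb R)$, $m,n\ge1$, such that $\sum_m|\alpha_m(s)|^2\le1$ for all $s\in\mathbb R$, $\sum_n|\beta_n(u)|^2\le1$ for all $u\in\mathbb R$, $\|[\theta_{m,n}(t)]_{m,n\ge1}\|_{\mathcal B(\ell^2)}\le1$ for all $t\in\mathbb R$, and $$\phi(s,t,u)=\big\langle(\alpha_m(s))_m,\ [\theta_{m,n}(t)]\,(\beta_n(u))_n\big\rangle_{\ell^2}\quad\text{for all }(s,t,u)\in\mathbb R^3.$$ In particular, if $f\in C^2(\mathbb R)$ is such that $f^{[2]}$ belongs to $(\ell^1_{\mathbb R}\otimes_h\ell^1_{\mathbb R}\otimes_h\ell^1_{\mathbb R})^*$, then there exist a separable Hilbert space $H$ and bounded Borel functions $a,b:\mathbb R^2\to H$ with $f^{[2]}(s,t,u)=\langle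 a(s,t),b(t,u)\rangle$ for all $(s,t,u)\in\mathbb R^3$.
   Context: $\otimes_h$ denotes the Haagerup tensor product and $\ell^1_{\mathbb R}$ the space of absolutely summable families indexed by $\mathbb R$. The dual space $(\ell^1_{\mathbb R}\otimes_h\ell^1_{\mathbb R}\otimes_h\ell^1_{\mathbb R})^*$ is identified with the space of functions $\phi:\mathbb R^3\to\mathbb C$ admitting a factorization $\phi(s,t,u)=\langle\alpha(s),\theta(t)\beta(u)\rangle$ with Hilbert spaces $E,F$ and bounded $\alpha:\mathbb R\to E$, $\theta:\mathbb R\to\mathcal B(F,E)$, $\beta:\mathbb R\to F$; $\phi$ has norm $\le1$ in this dual exactly when such a factorization exists with $\sup\|\alpha\|,\sup\|\theta\|,\sup\|\beta\|\le1$. Divided differences: $f^{[1]}(x_0,x_1)=\frac{f(x_0)-f(x_1)}{x_0-x_1}$ ($x_0\ne x_1$), $=f'(x_0)$ ($x_0=x_1$); $f^{[2]}(x_0,x_1,x_2)=\frac{f^{[1]}(x_0,x_2)-f^{[1]}(x_1,x_2)}{x_0-x_1}$ ($x_0\ne x_1$), $=\partial_1f^{[1]}(x_1,x_2)$ ($x_0=x_1$). *)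

From Stdlib Require Import Reals.
From Coquelicot Require Import Coquelicot.
Open Scope R_scope.

Record Hilbert := {
  hcar :> ModuleSpace C_Ring;
  hinner : hcar -> hcar -> C;
  hinner_addl : forall x y z : hcar,
      hinner (plus x y) z = Cplus (hinner x z) (hinner y z);
  hinner_scall : forall (a : C) (x y : hcar),
      hinner (scal a x) y = Cmult a (hinner x y);
  hinner_sym : forall x y : hcar, hinner y x = Cconj (hinner x y);
  hinner_pos : forall x : hcar, 0 <= Re (hinner x x);
  hinner_def : forall x : hcar, hinner x x = RtoC 0 -> x = zero;
  hcomplete : forall u : nat -> hcar,
      (forall eps, 0 < eps -> exists N : nat, forall m n, (N <= m)%nat -> (N <= n)%nat ->
          sqrt (Re (hinner (minus (u m) (u n)) (minus (u m) (u n)))) < eps) ->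
      exists l : hcar, forall eps, 0 < eps -> exists N : nat, forall n, (N <= n)%nat ->
          sqrt (Re (hinner (minus (u n) l) (minus (u n) l))) < eps
}.

Definition hnorm (H : Hilbert) (x : H) : R := sqrt (Re (hinner H x x)).

Definition Clinear (F E : Hilbert) (T : F -> E) : Prop :=
  (forall x y : F, T (plus x y) = plus (T x) (T y)) /\
  (forall (a : C) (x : F), T (scal a x) = scal a (T x)).

Definition separable (H : Hilbert) : Prop :=
  exists d : nat -> H, forall (x : H) (eps : R), 0 < eps ->
    exists n : nat, hnorm H (minus x (d n)) < eps.

Definition hopen (H : Hilbert) (O : H -> Prop) : Prop :=
  forall x, O x -> exists eps, 0 < eps /\ forall y, hnorm H (minus y x) < eps -> O y.

Definition sigma_algebra2 (S : (R * R -> Prop) -> Prop) : Prop :=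
  S (fun _ => False) /\
  (forall A, S A -> S (fun p => ~ A p)) /\
  (forall A : nat -> R * R -> Prop, (forall n, S (A n)) -> S (fun p => exists n, A n p)).

Definition borel2 (A : R * R -> Prop) : Prop :=
  forall S, sigma_algebra2 S -> (forall O : R * R -> Prop, open O -> S O) -> S A.

Definition borel_fun (H : Hilbert) (g : R * R -> H) : Prop :=
  forall O : H -> Prop, hopen H O -> borel2 (fun p => O (g p)).

Definition sep_continuous (phi : R -> R -> R -> C) : Prop :=
  (forall t u s, continuous (fun s' => phi s' t u) s) /\
  (forall s u t, continuous (fun t' => phi s t' u) t) /\
  (forall s t u, continuous (fun u' => phi s t u') u).

(** Membership in (l^1_R (x)_h l^1_R (x)_h l^1_R)^*, via the stated
    identification with factorizable functions with bounded factors. *)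
Definition in_h3dual (phi : R -> R -> R -> C) : Prop :=
  exists (E F : Hilbert) (alpha : R -> E) (theta : R -> F -> E) (beta : R -> F),
    (forall t, Clinear F E (theta t)) /\
    (exists c, forall s, hnorm E (alpha s) <= c) /\
    (exists c, forall t (x : F), hnorm E (theta t x) <= c * hnorm F x) /\
    (exists c, forall u, hnorm F (beta u) <= c) /\
    (forall s t u, phi s t u = hinner E (alpha s) (theta t (beta u))).

(** A matrix [M m n] (m, n >= 0 indexing m, n >= 1) defines a bounded
    operator on l^2 of norm <= 1. *)
Definition l2_contraction (M : nat -> nat -> C) : Prop :=
  forall x : nat -> C, ex_series (fun n => (Cmod (x n))^2) ->
    exists y : nat -> C,
      (forall m, is_series (fun n => Cmult (M m n) (x n)) (y m)) /\
      ex_series (fun m => (Cmod (y m))^2) /\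
      Series (fun m => (Cmod (y m))^2) <= Series (fun n => (Cmod (x n))^2).

Definition C2R (h : R -> R) : Prop :=
  (forall x, ex_derive h x) /\
  (forall x, ex_derive (Derive h) x) /\
  (forall x, continuous (Derive (Derive h)) x).

Definition C2C (f : R -> C) : Prop :=
  C2R (fun x => Re (f x)) /\ C2R (fun x => Im (f x)).

Definition Cderive (g : R -> C) (x : R) : C :=
  (Derive (fun y => Re (g y)) x, Derive (fun y => Im (g y)) x).

Definition dd1 (f : R -> C) (x0 x1 : R) : C :=
  if Req_EM_T x0 x1 then Cderive f x0
  else Cdiv (Cminus (f x0) (f x1)) (RtoC (x0 - x1)).

Definition dd2 (f : R -> C) (x0 x1 x2 : R) : C :=
  if Req_EM_T x0 x1 then Cderive (fun x => dd1 f x x2) x1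
  else Cdiv (Cminus (dd1 f x0 x2) (dd1 f x1 x2)) (RtoC (x0 - x1)).

From Stdlib Require Import Reals.
From Coquelicot Require Import Coquelicot.
From Stdlib Require Import Lra Lia ZArith Cantor IndefiniteDescription FunctionalExtensionality ProofIrrelevance PropExtensionality Classical.
Open Scope R_scope.

(* Replace alpha(s) by its orthogonal projection a(s) ([alpha_proj]) onto the closed span E0 of
   the vectors theta(t) beta(u), and then beta(u) by its projection b(u) onto the
   closed span F0 of the vectors theta(t)^* a(s); this does not change phi.  On
   E0 (resp. F0) the map s |-> <a(s), v> (resp. u |-> <b(u), v>) is continuous,
   because it is on the generators by separate continuity of phi and the set of
   such v is a closed subspace.  A vector orthogonal to every a(d_k), d_k dense in
   R, is then orthogonal to every a(s), so all a(s) lie in the separable closed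
   span A of the a(d_k); likewise for b and B.  Gram-Schmidt bases (e_m) of A and
   (f_n) of B give the continuous coefficients a_m(s) = <a(s), e_m>,
   b_n(u) = <b(u), f_n> and theta_mn(t) = <theta(t) f_n, e_m>.
   For f in C^2 the second divided difference is separately continuous; after
   rescaling the factors, a(s, t) = (a_m(s))_m and b(t, u) = [theta_mn(t)] (b_n(u))_n
   define bounded maps into l^2 which are Borel, being pointwise limits of
   continuous functions coordinatewise. *)

Ltac C_componentwise := apply injective_projections; simpl; try field_simplify; try ring.

(** * Inner product spaces *)

Section InnerProductSpace.
Variable H : Hilbert.
Notation ip := (hinner H).
Notation nrm := (hnorm H).
Notation HG := (ModuleSpace.AbelianGroup C_Ring (hcar H)).

Lemma hscal_one (x : H) : scal (RtoC 1) x = x.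
Proof. exact (scal_one x). Qed.

Lemma hscal_zero_l (x : H) : scal (RtoC 0) x = zero.
Proof. exact (scal_zero_l (K:=C_Ring) x). Qed.

Lemma hscal_assoc (a b : C) (x : H) : scal a (scal b x) = scal (Cmult a b) x.
Proof. exact (scal_assoc a b x). Qed.

Lemma hscal_distr_r (a b : C) (x : H) : scal (Cplus a b) x = plus (scal a x) (scal b x).
Proof. exact (scal_distr_r a b x). Qed.

Lemma hscal_distr_l (a : C) (x y : H) : scal a (plus x y) = plus (scal a x) (scal a y).
Proof. exact (scal_distr_l a x y). Qed.

Lemma hscal_minus_distr_l (a : C) (x y : H) : scal a (minus x y) = minus (scal a x) (scal a y).
Proof. exact (scal_minus_distr_l a x y). Qed.

Lemma hplus_comm (x y : H) : plus x y = plus y x.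
Proof. exact (plus_comm x y). Qed.

Lemma hplus_zero_r (x : H) : plus x zero = x.
Proof. apply (plus_zero_r (G:=HG)). Qed.

Lemma minus_diag (x : H) : minus x x = zero.
Proof. apply (minus_eq_zero (G:=HG)). Qed.

Lemma plus_minus_cancel (p x : H) : plus p (minus x p) = x.
Proof.
  unfold minus. rewrite ((plus_comm (G:=HG)) x), (plus_assoc (G:=HG)), (plus_opp_r (G:=HG)).
  apply (plus_zero_l (G:=HG)).
Qed.

Lemma minus_plus_cancel_l (a b : H) : minus (plus a b) a = b.
Proof.
  rewrite (hplus_comm a b). unfold minus.
  rewrite <- (plus_assoc (G:=HG)), (plus_opp_r (G:=HG)). apply (plus_zero_r (G:=HG)).
Qed.

Lemma minus_eq0 (a b : H) : minus a b = zero -> a = b.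
Proof. intro Heq. rewrite <- (plus_minus_cancel b a), Heq. apply hplus_zero_r. Qed.

Lemma plus_minus_minus (x y a b : H) : plus (minus x a) (minus y b) = minus (plus x y) (plus a b).
Proof.
  unfold minus. rewrite (opp_plus (G:=HG)).
  rewrite <- !(plus_assoc (G:=HG)). f_equal.
  rewrite !(plus_assoc (G:=HG)). rewrite ((plus_comm (G:=HG)) (opp a) y). reflexivity.
Qed.

Lemma minus_minus_minus (x a b : H) : minus (minus x a) (minus x b) = minus b a.
Proof.
  unfold minus. rewrite (opp_plus (G:=HG)), (opp_opp (G:=HG)).
  rewrite <- !(plus_assoc (G:=HG)). rewrite ((plus_comm (G:=HG)) (opp a)).
  rewrite !(plus_assoc (G:=HG)). rewrite (plus_opp_r (G:=HG)), (plus_zero_l (G:=HG)).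
  reflexivity.
Qed.

Lemma minus_plus_r (x l w : H) : minus x (plus l w) = minus (minus x l) w.
Proof. unfold minus. rewrite (opp_plus (G:=HG)), (plus_assoc (G:=HG)). reflexivity. Qed.

Lemma plus_plus_swap (a b c d : H) : plus (plus a b) (plus c d) = plus (plus a c) (plus b d).
Proof.
  rewrite <- !(plus_assoc (G:=HG)). f_equal. rewrite !(plus_assoc (G:=HG)). f_equal.
  apply (plus_comm (G:=HG)).
Qed.

Lemma hinner_addr (x y z : H) : ip x (plus y z) = Cplus (ip x y) (ip x z).
Proof. rewrite hinner_sym, hinner_addl, Cplus_conj, <- !hinner_sym. reflexivity. Qed.

Lemma hinner_scalr (a : C) (x y : H) : ip x (scal a y) = Cmult (Cconj a) (ip x y).
Proof. rewrite hinner_sym, hinner_scall, Cmult_conj, <- hinner_sym. reflexivity. Qed.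

Lemma hinner_zero_l (y : H) : ip zero y = RtoC 0.
Proof.
  rewrite <- (scal_zero_l (K:=C_Ring) (zero : H)), hinner_scall.
  change (@zero C_Ring) with (RtoC 0). apply Cmult_0_l.
Qed.

Lemma hinner_zero_r (y : H) : ip y zero = RtoC 0.
Proof. rewrite hinner_sym, hinner_zero_l. C_componentwise. Qed.

Lemma hinner_opp_l (x y : H) : ip (opp x) y = Copp (ip x y).
Proof.
  rewrite <- (scal_opp_one (K:=C_Ring)), hinner_scall.
  change (@opp C_Ring (@one C_Ring)) with (Copp (RtoC 1)). ring.
Qed.

Lemma hinner_opp_r (x y : H) : ip x (opp y) = Copp (ip x y).
Proof. rewrite hinner_sym, hinner_opp_l, Copp_conj, <- hinner_sym. reflexivity. Qed.

Lemma hinner_minus_l (x y z : H) : ip (minus x y) z = Cminus (ip x z) (ip y z).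
Proof. unfold minus. rewrite hinner_addl, hinner_opp_l. reflexivity. Qed.

Lemma hinner_minus_r (x y z : H) : ip z (minus x y) = Cminus (ip z x) (ip z y).
Proof. unfold minus. rewrite hinner_addr, hinner_opp_r. reflexivity. Qed.

Lemma hinner_self_real (x : H) : ip x x = RtoC (Re (ip x x)).
Proof.
  pose proof (hinner_sym H x x) as E.
  destruct (ip x x) as [p q]. unfold Cconj in E. simpl in *.
  injection E as Eq. unfold RtoC. f_equal. lra.
Qed.

Lemma hnorm_ge0 (x : H) : 0 <= nrm x.
Proof. apply sqrt_pos. Qed.

Lemma hnorm_sq (x : H) : nrm x ^ 2 = Re (ip x x).
Proof. unfold hnorm. rewrite pow2_sqrt; auto. apply hinner_pos. Qed.

Lemma hinner_self_hnorm (x : H) : ip x x = RtoC (nrm x ^ 2).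
Proof. rewrite hnorm_sq. apply hinner_self_real. Qed.

Lemma hnorm_zero : nrm zero = 0.
Proof. unfold hnorm. rewrite hinner_zero_l. simpl. apply sqrt_0. Qed.

Lemma hnorm_eq0 (x : H) : nrm x = 0 -> x = zero.
Proof. intro E. apply hinner_def. rewrite hinner_self_hnorm, E. C_componentwise. Qed.

Lemma hnorm_scal (a : C) (x : H) : nrm (scal a x) = Cmod a * nrm x.
Proof.
  unfold hnorm. rewrite hinner_scall, hinner_scalr, (hinner_self_real x). unfold Cmod.
  rewrite <- sqrt_mult_alt.
  - f_equal. destruct a as [p q]. simpl. ring.
  - nra.
Qed.

Lemma hnorm_opp (x : H) : nrm (opp x) = nrm x.
Proof.
  rewrite <- (scal_opp_one (K:=C_Ring)), hnorm_scal.
  change (@opp C_Ring (@one C_Ring)) with (Copp (RtoC 1)).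
  rewrite Cmod_opp, Cmod_1. ring.
Qed.

Lemma hnorm_minus_sym (x y : H) : nrm (minus x y) = nrm (minus y x).
Proof. rewrite <- hnorm_opp. f_equal. apply opp_minus. Qed.

Lemma hnorm_plus_sq (x y : H) :
  nrm (plus x y) ^ 2 = nrm x ^ 2 + nrm y ^ 2 + 2 * Re (ip x y).
Proof.
  rewrite !hnorm_sq, !hinner_addl, !hinner_addr, (hinner_sym H x y).
  destruct (ip x y) as [p q]. unfold Re; simpl. ring.
Qed.

Lemma hnorm_minus_sq (x y : H) :
  nrm (minus x y) ^ 2 = nrm x ^ 2 + nrm y ^ 2 - 2 * Re (ip x y).
Proof.
  unfold minus. rewrite hnorm_plus_sq, hnorm_opp, hinner_opp_r.
  destruct (ip x y) as [p q]. unfold Re; simpl. ring.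
Qed.

Lemma Pythagoras (x y : H) : ip x y = RtoC 0 -> nrm (plus x y) ^ 2 = nrm x ^ 2 + nrm y ^ 2.
Proof. intro E. rewrite hnorm_plus_sq, E. simpl. ring. Qed.

Lemma parallelogram (x y : H) :
  nrm (plus x y) ^ 2 + nrm (minus x y) ^ 2 = 2 * nrm x ^ 2 + 2 * nrm y ^ 2.
Proof. rewrite hnorm_plus_sq, hnorm_minus_sq. ring. Qed.

Lemma Cauchy_Schwarz (x y : H) : Cmod (ip x y) <= nrm x * nrm y.
Proof.
  destruct (Req_dec (nrm y) 0) as [Hy|Hy].
  { apply hnorm_eq0 in Hy. subst. rewrite hinner_zero_r, Cmod_0, hnorm_zero. lra. }
  pose proof (hnorm_ge0 y) as Hy0.
  set (N := nrm y ^ 2).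
  assert (HN : 0 < N) by (unfold N; nra).
  (* expand 0 <= |x - lam y|^2 with lam = <x, y> / |y|^2 *)
  pose proof (hinner_pos H (minus x (scal (Cmult (ip x y) (RtoC (/ N))) y))) as P.
  rewrite hinner_minus_l, !hinner_minus_r, !hinner_scall, !hinner_scalr in P.
  rewrite (hinner_sym H x y), (hinner_self_hnorm y), (hinner_self_hnorm x) in P.
  fold N in P.
  destruct (ip x y) as [p q]. simpl in P.
  assert (Hm : Cmod (p, q) ^ 2 = p^2 + q^2) by (rewrite Cmod2_alt; reflexivity).
  assert (P' : 0 <= nrm x ^ 2 - (p^2 + q^2) / N).
  { field_simplify in P; [| lra].
    replace (nrm x ^ 2 - (p ^ 2 + q ^ 2) / N) with ((nrm x ^ 2 * N - p ^ 2 - q ^ 2) * / N)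
      by (field; lra).
    exact P. }
  apply Rsqr_incr_0_var.
  - unfold Rsqr.
    replace (nrm x * nrm y * (nrm x * nrm y)) with (nrm x ^ 2 * N) by (unfold N; ring).
    replace (Cmod (p, q) * Cmod (p, q)) with (p^2+q^2) by (rewrite <- Hm; ring).
    apply Rmult_le_reg_r with (/ N). apply Rinv_0_lt_compat; lra.
    replace (nrm x ^ 2 * N * / N) with (nrm x ^ 2) by (field; lra). unfold Rdiv in P'. lra.
  - apply Rmult_le_pos; apply hnorm_ge0.
Qed.

Lemma Cmod_hinner_le (x y : H) (c : R) : nrm x <= c -> Cmod (ip x y) <= c * nrm y.
Proof. intro. pose proof (Cauchy_Schwarz x y). pose proof (hnorm_ge0 y). nra. Qed.

Lemma hnorm_triangle (x y : H) : nrm (plus x y) <= nrm x + nrm y.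
Proof.
  apply Rsqr_incr_0_var.
  - unfold Rsqr. pose proof (hnorm_plus_sq x y).
    pose proof (re_le_Cmod (ip x y)). pose proof (Rle_abs (Re (ip x y))).
    pose proof (Cauchy_Schwarz x y). nra.
  - pose proof (hnorm_ge0 x); pose proof (hnorm_ge0 y); lra.
Qed.

Lemma hnorm_minus_triangle (x y z : H) : nrm (minus x z) <= nrm (minus x y) + nrm (minus y z).
Proof. rewrite (minus_trans y x z). apply hnorm_triangle. Qed.

End InnerProductSpace.

Lemma Cmod_minus_sym (a b : C) : Cmod (Cminus a b) = Cmod (Cminus b a).
Proof. replace (Cminus a b) with (Copp (Cminus b a)) by ring. apply Cmod_opp. Qed.

Lemma Cmod_minus_triangle (a b c : C) : Cmod (Cminus a c) <= Cmod (Cminus a b) + Cmod (Cminus b c).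
Proof. replace (Cminus a c) with (Cplus (Cminus a b) (Cminus b c)) by ring. apply Cmod_triangle. Qed.

Lemma Im_le_Cmod (c : C) : Rabs (Im c) <= Cmod c.
Proof.
  destruct c as [p q]. unfold Cmod. simpl. rewrite <- sqrt_Rsqr_abs. apply sqrt_le_1_alt.
  unfold Rsqr. nra.
Qed.

Lemma Cmod_le_Re_Im (c : C) : Cmod c <= Rabs (Re c) + Rabs (Im c).
Proof.
  destruct c as [p q]. unfold Cmod. simpl.
  apply Rsqr_incr_0_var. rewrite Rsqr_sqrt by nra. unfold Rsqr.
  pose proof (Rabs_pos p). pose proof (Rabs_pos q).
  replace (p * (p * 1) + q * (q * 1)) with (Rabs p * Rabs p + Rabs q * Rabs q).
  nra. rewrite <- !Rabs_mult. rewrite !Rabs_right by nra. ring.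
  pose proof (Rabs_pos p). pose proof (Rabs_pos q). lra.
Qed.

Lemma Cmod_plus_sq (a b : C) : Cmod (Cplus a b) ^ 2 <= 2 * Cmod a ^ 2 + 2 * Cmod b ^ 2.
Proof.
  pose proof (Cmod_triangle a b). pose proof (Cmod_ge_0 (Cplus a b)).
  pose proof (Cmod_ge_0 a). pose proof (Cmod_ge_0 b).
  assert (Cmod (Cplus a b) ^ 2 <= (Cmod a + Cmod b) ^ 2) by (apply pow_incr; lra).
  pose proof (pow2_ge_0 (Cmod a - Cmod b)). nra.
Qed.

Lemma inv_INR_S_lt (eps : R) : 0 < eps -> exists N : nat, forall k, (N <= k)%nat -> / INR (S k) < eps.
Proof.
  intro He. destruct (archimed (/ eps)) as [Ha _].
  assert (Hup : (0 <= up (/ eps))%Z).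
  { apply le_IZR. pose proof (Rinv_0_lt_compat _ He). lra. }
  exists (Z.to_nat (up (/ eps))). intros k Hk.
  rewrite <- (Rinv_inv eps). apply Rinv_lt_contravar.
  - apply Rmult_lt_0_compat. apply Rinv_0_lt_compat; auto. apply lt_0_INR; lia.
  - apply Rlt_le_trans with (IZR (up (/ eps))); auto.
    rewrite <- (Z2Nat.id _ Hup), <- INR_IZR_INZ. apply le_INR. lia.
Qed.

Lemma continuous_C_eps (f : R -> C) (x : R) :
  continuous f x <->
  (forall eps, 0 < eps -> exists del, 0 < del /\
     forall y, Rabs (y - x) < del -> Cmod (Cminus (f y) (f x)) < eps).
Proof.
  split.
  - intros Hc eps He.
    assert (He' : 0 < eps / sqrt 2) by (apply Rdiv_lt_0_compat; [lra| apply sqrt_lt_R0; lra]).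
    destruct (proj1 (filterlim_locally f (f x)) Hc (mkposreal _ He')) as [del Hd].
    exists del. split. apply cond_pos. intros y Hy.
    apply Hd, C_NormedModule_mixin_compat2 in Hy. simpl in Hy.
    replace (sqrt 2 * (eps / sqrt 2)) with eps in Hy by (field; apply Rgt_not_eq, sqrt_lt_R0; lra).
    exact Hy.
  - intros Hd. apply filterlim_locally. intro eps.
    destruct (Hd eps (cond_pos eps)) as [del [Hdel Hy]].
    exists (mkposreal _ Hdel). intros y By. apply C_NormedModule_mixin_compat1, Hy, By.
Qed.

Lemma continuous_Cconj (f : R -> C) x : continuous f x -> continuous (fun y => Cconj (f y)) x.
Proof.
  rewrite !continuous_C_eps. intros Hc eps He. destruct (Hc eps He) as [d [Hd Hy]].
  exists d. split; auto. intros y Hyd. rewrite <- Cminus_conj, Cmod_conj. auto.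
Qed.

Lemma continuous_Cplus (f g : R -> C) x : continuous f x -> continuous g x ->
  continuous (fun y => Cplus (f y) (g y)) x.
Proof.
  rewrite !continuous_C_eps. intros Hf Hg eps He.
  destruct (Hf (eps/2)) as [d1 [Hd1 H1]]. lra.
  destruct (Hg (eps/2)) as [d2 [Hd2 H2]]. lra.
  exists (Rmin d1 d2). split. apply Rmin_pos; auto.
  intros y Hy. pose proof (Rmin_l d1 d2). pose proof (Rmin_r d1 d2).
  specialize (H1 y ltac:(lra)). specialize (H2 y ltac:(lra)).
  replace (Cminus (Cplus (f y) (g y)) (Cplus (f x) (g x)))
    with (Cplus (Cminus (f y) (f x)) (Cminus (g y) (g x))) by ring.
  eapply Rle_lt_trans. apply Cmod_triangle. lra.
Qed.

Lemma continuous_Cmult (f g : R -> C) x : continuous f x -> continuous g x ->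
  continuous (fun y => Cmult (f y) (g y)) x.
Proof.
  rewrite !continuous_C_eps. intros Hf Hg eps He.
  set (A := Cmod (f x) + 1). set (B := Cmod (g x) + 1).
  assert (HA : 0 < A) by (unfold A; pose proof (Cmod_ge_0 (f x)); lra).
  assert (HB : 0 < B) by (unfold B; pose proof (Cmod_ge_0 (g x)); lra).
  destruct (Hf (Rmin 1 (eps / (2 * B)))) as [d1 [Hd1 H1]].
  { apply Rmin_pos; [lra| apply Rdiv_lt_0_compat; lra]. }
  destruct (Hg (eps / (2 * A))) as [d2 [Hd2 H2]].
  { apply Rdiv_lt_0_compat; lra. }
  exists (Rmin d1 d2). split. apply Rmin_pos; auto.
  intros y Hy. pose proof (Rmin_l d1 d2). pose proof (Rmin_r d1 d2).
  specialize (H1 y ltac:(lra)). specialize (H2 y ltac:(lra)).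
  pose proof (Rmin_l 1 (eps / (2 * B))). pose proof (Rmin_r 1 (eps / (2 * B))).
  replace (Cminus (Cmult (f y) (g y)) (Cmult (f x) (g x)))
    with (Cplus (Cmult (f y) (Cminus (g y) (g x))) (Cmult (Cminus (f y) (f x)) (g x))) by ring.
  eapply Rle_lt_trans. apply Cmod_triangle. rewrite !Cmod_mult.
  assert (Fy : Cmod (f y) <= A).
  { unfold A. replace (f y) with (Cplus (f x) (Cminus (f y) (f x))) by ring.
    pose proof (Cmod_triangle (f x) (Cminus (f y) (f x))). lra. }
  assert (T1 : Cmod (f y) * Cmod (Cminus (g y) (g x)) <= A * (eps / (2 * A))).
  { apply Rmult_le_compat; try apply Cmod_ge_0; lra. }
  assert (T2 : Cmod (Cminus (f y) (f x)) * Cmod (g x) < (eps / (2 * B)) * B).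
  { unfold B. pose proof (Cmod_ge_0 (g x)). pose proof (Cmod_ge_0 (Cminus (f y) (f x))).
    apply Rle_lt_trans with ((eps / (2 * B)) * Cmod (g x)).
    apply Rmult_le_compat_r; lra. apply Rmult_lt_compat_l. apply Rdiv_lt_0_compat; lra. unfold B; lra. }
  replace (A * (eps / (2 * A))) with (eps / 2) in T1 by (field; lra).
  replace (eps / (2 * B) * B) with (eps / 2) in T2 by (field; lra). lra.
Qed.

Lemma is_series_C_eps (a : nat -> C) (l : C) :
  is_series a l <->
  (forall eps, 0 < eps -> exists N, forall n, (N <= n)%nat -> Cmod (Cminus (sum_n a n) l) < eps).
Proof.
  split.
  - intros Hs eps He.
    assert (He' : 0 < eps / sqrt 2) by (apply Rdiv_lt_0_compat; [lra| apply sqrt_lt_R0; lra]).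
    destruct (proj1 (filterlim_locally (sum_n a) l) Hs (mkposreal _ He')) as [N HN].
    exists N. intros n Hn. specialize (HN n Hn). apply C_NormedModule_mixin_compat2 in HN. simpl in HN.
    replace (sqrt 2 * (eps / sqrt 2)) with eps in HN by (field; apply Rgt_not_eq, sqrt_lt_R0; lra).
    exact HN.
  - intros Hd. unfold is_series. apply filterlim_locally. intro eps.
    destruct (Hd eps (cond_pos eps)) as [N HN]. exists N. intros n Hn.
    apply C_NormedModule_mixin_compat1. apply HN; auto.
Qed.

Definition dense_seq (d : nat -> R) : Prop :=
  forall x eps, 0 < eps -> exists k, Rabs (d k - x) < eps.

Lemma dense_continuous_eq0 (d : nat -> R) (g : R -> C) :
  dense_seq d -> (forall x, continuous g x) -> (forall k, g (d k) = RtoC 0) ->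
  forall x, g x = RtoC 0.
Proof.
  intros Hd Hc Hz x. apply Cmod_eq_0.
  apply Rle_antisym; [|apply Cmod_ge_0].
  apply Rnot_lt_le. intro Hp.
  destruct (proj1 (continuous_C_eps g x) (Hc x) _ Hp) as [del [Hdel Hy]].
  destruct (Hd x del Hdel) as [k Hk]. specialize (Hy _ Hk). rewrite Hz in Hy.
  replace (Cminus (RtoC 0) (g x)) with (Copp (g x)) in Hy by ring. rewrite Cmod_opp in Hy. lra.
Qed.

(** * Orthogonal projection and the Riesz representation *)

Section ClosedSubspaces.
Variable H : Hilbert.
Notation ip := (hinner H).
Notation nrm := (hnorm H).

Definition subspace (M : H -> Prop) : Prop :=
  M zero /\ (forall x y, M x -> M y -> M (plus x y)) /\
  (forall (a : C) x, M x -> M (scal a x)).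

Definition hclosed (M : H -> Prop) : Prop :=
  forall x, (forall eps, 0 < eps -> exists m, M m /\ nrm (minus x m) < eps) -> M x.

Definition closed_span (V : H -> Prop) (x : H) : Prop :=
  forall M, subspace M -> hclosed M -> (forall v, V v -> M v) -> M x.

Lemma subspace_minus M : subspace M -> forall x y, M x -> M y -> M (minus x y).
Proof.
  intros [Hz [Hp Hs]] x y Hx Hy. apply Hp; auto.
  rewrite <- (scal_opp_one (K:=C_Ring)). apply Hs; auto.
Qed.

Lemma closed_span_subspace V : subspace (closed_span V).
Proof.
  split; [|split].
  - intros M [Hz _] _ _. auto.
  - intros x y Hx Hy M HM HC HV. destruct HM as [Hz [Hp Hs]].
    apply Hp; [apply Hx|apply Hy]; auto; split; auto.
  - intros a x Hx M HM HC HV. destruct HM as [Hz [Hp Hs]].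
    apply Hs; apply Hx; auto; split; auto.
Qed.

Lemma closed_span_closed V : hclosed (closed_span V).
Proof.
  intros x Hx M HM HC HV. apply HC. intros eps Heps.
  destruct (Hx eps Heps) as [m [Hm Hd]]. exists m. split; auto.
  apply Hm; auto.
Qed.

Lemma closed_span_incl V : forall v, V v -> closed_span V v.
Proof. intros v Hv M _ _ HV. auto. Qed.

Lemma closed_span_min V M : subspace M -> hclosed M -> (forall v, V v -> M v) ->
  forall x, closed_span V x -> M x.
Proof. intros HM HC HV x Hx. apply Hx; auto. Qed.

Section Projection.
Variables (M : H -> Prop) (x : H).
Hypotheses (HM : subspace M) (HC : hclosed M).

Lemma dist_subspace_inf : exists d, 0 <= d /\ (forall m, M m -> d <= nrm (minus x m)) /\
  forall eps, 0 < eps -> exists m, M m /\ nrm (minus x m) < d + eps.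
Proof.
  set (E := fun r => exists m, M m /\ r = - nrm (minus x m)).
  assert (Hb : bound E).
  { exists 0. intros r [m [_ ->]]. pose proof (hnorm_ge0 H (minus x m)). lra. }
  assert (Hne : exists r, E r) by (exists (- nrm (minus x zero)), zero; split; auto; apply HM).
  destruct (completeness E Hb Hne) as [L [HL1 HL2]].
  exists (- L). split; [|split].
  - enough (L <= 0) by lra. apply HL2. intros r' [m [_ ->]].
    pose proof (hnorm_ge0 H (minus x m)). lra.
  - intros m Hm. assert (E (- nrm (minus x m))) as Em by (exists m; auto).
    apply HL1 in Em. lra.
  - intros eps He. apply NNPP. intro Hno.
    assert (L <= - (- L + eps)); [|lra].
    apply HL2. intros r [m [Hm ->]].
    destruct (Rlt_le_dec (nrm (minus x m)) (- L + eps)); [exfalso; eauto | lra].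
Qed.

Lemma midpoint_dist_ge (d : R) (m1 m2 : H) :
  (forall m, M m -> d <= nrm (minus x m)) -> M m1 -> M m2 ->
  2 * d <= nrm (plus (minus x m1) (minus x m2)).
Proof.
  intros Hd M1 M2.
  assert (Mmid : M (scal (RtoC (/2)) (plus m1 m2))) by (apply HM; apply HM; auto).
  assert (Eq : plus (minus x m1) (minus x m2) =
               scal (RtoC 2) (minus x (scal (RtoC (/2)) (plus m1 m2)))).
  { rewrite hscal_minus_distr_l, hscal_assoc, <- RtoC_mult, Rinv_r, hscal_one by lra.
    replace (RtoC 2) with (Cplus (RtoC 1) (RtoC 1)) by C_componentwise.
    rewrite hscal_distr_r, hscal_one. apply plus_minus_minus. }
  pose proof (Hd _ Mmid). rewrite Eq, hnorm_scal, Cmod_R, Rabs_pos_eq by lra. lra.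
Qed.

Lemma minimizing_seq_Cauchy (d : R) (mk : nat -> H) :
  0 <= d -> (forall m, M m -> d <= nrm (minus x m)) ->
  (forall k, M (mk k) /\ nrm (minus x (mk k)) < d + / INR (S k)) ->
  forall eps, 0 < eps -> exists N : nat, forall m n, (N <= m)%nat -> (N <= n)%nat ->
    sqrt (Re (ip (minus (mk m) (mk n)) (minus (mk m) (mk n)))) < eps.
Proof.
  intros Hd0 Hd Hmk eps Heps.
  set (del := Rmin 1 (eps ^ 2 / (8 * (2 * d + 1)))).
  assert (Hdel : 0 < del) by (unfold del; apply Rmin_pos; [lra| apply Rdiv_lt_0_compat; nra]).
  destruct (inv_INR_S_lt del Hdel) as [N Hsm].
  exists N. intros m n Hm Hn. fold (hnorm H (minus (mk m) (mk n))).
  (* parallelogram law, with |2x - m_n - m_m| >= 2d since the midpoint lies in M *)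
  pose proof (parallelogram H (minus x (mk n)) (minus x (mk m))) as P.
  rewrite minus_minus_minus in P.
  assert (P' : nrm (plus (minus x (mk n)) (minus x (mk m))) ^ 2 + nrm (minus (mk m) (mk n)) ^ 2 =
    2 * nrm (minus x (mk n)) ^ 2 + 2 * nrm (minus x (mk m)) ^ 2) by exact P. clear P.
  pose proof (midpoint_dist_ge d (mk n) (mk m) Hd (proj1 (Hmk n)) (proj1 (Hmk m))).
  pose proof (Hmk m) as [_ Am]. pose proof (Hmk n) as [_ An].
  pose proof (Hsm m Hm). pose proof (Hsm n Hn).
  pose proof (Hd _ (proj1 (Hmk m))). pose proof (Hd _ (proj1 (Hmk n))).
  assert (del <= 1) by apply Rmin_l.
  assert (del <= eps ^ 2 / (8 * (2 * d + 1))) by apply Rmin_r.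
  assert (nrm (minus x (mk m)) ^ 2 <= d^2 + del * (2*d+1)) by nra.
  assert (nrm (minus x (mk n)) ^ 2 <= d^2 + del * (2*d+1)) by nra.
  assert (4 * d^2 <= nrm (plus (minus x (mk n)) (minus x (mk m))) ^ 2) by nra.
  assert (del * (2 * d + 1) <= eps ^ 2 / 8).
  { apply Rmult_le_reg_r with (/ (2*d+1)). apply Rinv_0_lt_compat; lra.
    replace (del * (2 * d + 1) * / (2 * d + 1)) with del by (field; lra).
    replace (eps ^ 2 / 8 * / (2 * d + 1)) with (eps ^ 2 / (8 * (2 * d + 1))) by (field; lra). lra. }
  assert (0 < eps ^ 2) by (apply pow_lt; lra).
  assert (Hsq : nrm (minus (mk m) (mk n)) ^ 2 < eps ^ 2) by lra.
  pose proof (hnorm_ge0 H (minus (mk m) (mk n))). nra.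
Qed.

Lemma minimizer_perp (l : H) : M l -> (forall m, M m -> nrm (minus x l) <= nrm (minus x m)) ->
  forall m, M m -> ip (minus x l) m = RtoC 0.
Proof.
  intros Ml Hmin m Hm.
  set (z := minus x l). set (c := ip z m).
  set (r := / (nrm m ^ 2 + 1)).
  assert (Hr : 0 < r) by (unfold r; apply Rinv_0_lt_compat; pose proof (pow2_ge_0 (nrm m)); lra).
  assert (Hrm : r * nrm m ^ 2 < 1).
  { unfold r. pose proof (pow2_ge_0 (nrm m)). apply Rmult_lt_reg_r with (nrm m ^ 2 + 1); [lra|].
    replace (/ (nrm m ^ 2 + 1) * nrm m ^ 2 * (nrm m ^ 2 + 1)) with (nrm m ^ 2) by (field; lra). lra. }
  (* minimality of l against the competitor l + r c m forces c = 0 *)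
  set (lam := Cmult (RtoC r) c).
  assert (Ml2 : M (plus l (scal lam m))) by (apply HM; auto; apply HM; auto).
  pose proof (Hmin _ Ml2) as Hm2.
  rewrite minus_plus_r in Hm2. fold z in Hm2.
  assert (Sq : nrm z ^ 2 <= nrm (minus z (scal lam m)) ^ 2).
  { pose proof (hnorm_ge0 H z). apply pow_incr; auto. }
  rewrite hnorm_minus_sq, hnorm_scal, hinner_scalr in Sq. fold c in Sq.
  unfold lam in Sq. rewrite Cmod_mult, Cmod_R, Rabs_pos_eq in Sq by lra.
  destruct c as [p q] eqn:Ec. simpl in Sq.
  set (K := Cmod (p, q)) in *. set (nm := nrm m) in *.
  assert (Cm : K ^ 2 = p ^ 2 + q ^ 2) by (unfold K; rewrite Cmod2_alt; reflexivity).
  assert (Sq2 : 0 <= r * (p^2+q^2) * (r * nm ^ 2 - 2)).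
  { replace (r * (p^2+q^2) * (r * nm ^ 2 - 2)) with ((r * K * nm) ^ 2 - 2 * r * (p^2+q^2))
      by (rewrite <- Cm; ring).
    lra. }
  assert (0 <= p^2+q^2) by nra.
  assert (Hpq : p ^ 2 + q ^ 2 <= 0).
  { assert (0 < r * (2 - r * nm ^ 2)) by (apply Rmult_lt_0_compat; lra). nra. }
  C_componentwise; nra.
Qed.

Lemma orthogonal_projection_perp : exists p, M p /\ forall m, M m -> ip (minus x p) m = RtoC 0.
Proof.
  destruct dist_subspace_inf as [d [Hd0 [Hd Happ]]].
  assert (Hch : forall k : nat, exists m, M m /\ nrm (minus x m) < d + / INR (S k))
    by (intro k; apply Happ, Rinv_0_lt_compat, lt_0_INR; lia).
  set (mk := fun k => proj1_sig (constructive_indefinite_description _ (Hch k))).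
  assert (Hmk : forall k, M (mk k) /\ nrm (minus x (mk k)) < d + / INR (S k))
    by (intro k; exact (proj2_sig (constructive_indefinite_description _ (Hch k)))).
  destruct (hcomplete H mk (minimizing_seq_Cauchy d mk Hd0 Hd Hmk)) as [l Hl].
  assert (Ml : M l).
  { apply HC. intros eps He. destruct (Hl eps He) as [N HN]. exists (mk N).
    split; [apply Hmk|]. rewrite hnorm_minus_sym. apply HN; auto. }
  exists l. split; auto. apply minimizer_perp; auto.
  intros m Hm. pose proof (Hd m Hm). apply Rnot_lt_le. intro Hlt.
  set (g := nrm (minus x l) - d).
  destruct (Hl (g/2)) as [N1 HN1]. unfold g; lra.
  destruct (inv_INR_S_lt (g/2)) as [N2 HN2]. unfold g; lra.
  set (k := Nat.max N1 N2).
  pose proof (HN1 k ltac:(unfold k; lia)) as Hlk. fold (hnorm H (minus (mk k) l)) in Hlk.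
  pose proof (HN2 k ltac:(unfold k; lia)).
  pose proof (Hmk k) as [_ Hk2]. pose proof (hnorm_minus_triangle H x (mk k) l).
  unfold g in *. lra.
Qed.

End Projection.

Lemma orthogonal_projection (M : H -> Prop) : subspace M -> hclosed M ->
  forall x, exists p, M p /\ (forall m, M m -> ip p m = ip x m) /\ nrm p <= nrm x /\
    (forall m, M m -> ip (minus x p) m = RtoC 0).
Proof.
  intros HM HC x. destruct (orthogonal_projection_perp M x HM HC) as [p [Mp Hp]].
  exists p. repeat split; auto.
  - intros m Mm. pose proof (Hp m Mm) as E. rewrite hinner_minus_l in E.
    apply Ceq_minus in E. auto.
  - assert (Hs : nrm x ^ 2 = nrm p ^ 2 + nrm (minus x p) ^ 2).
    { rewrite <- (plus_minus_cancel H p x) at 1. apply Pythagoras.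
      rewrite hinner_sym, Hp by auto. C_componentwise. }
    apply Rsqr_incr_0_var; [|apply hnorm_ge0].
    unfold Rsqr. pose proof (pow2_ge_0 (nrm (minus x p))). nra.
Qed.

Section BoundedFunctional.
Variables (l : H -> C) (c : R).
Hypotheses (Ladd : forall x y, l (plus x y) = Cplus (l x) (l y))
  (Lsc : forall a x, l (scal a x) = Cmult a (l x))
  (Lb : forall x, Cmod (l x) <= c * nrm x).

Lemma functional_minus x y : l (minus x y) = Cminus (l x) (l y).
Proof.
  unfold minus. rewrite Ladd, <- (scal_opp_one (K:=C_Ring)), Lsc.
  change (@opp C_Ring (@one C_Ring)) with (Copp (RtoC 1)). ring.
Qed.

Lemma functional_zero : l zero = RtoC 0.
Proof. rewrite <- (hscal_zero_l H zero), Lsc. ring. Qed.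

Lemma functional_kernel_subspace : subspace (fun f => l f = RtoC 0).
Proof.
  split; [|split].
  - apply functional_zero.
  - intros x y Hx Hy. rewrite Ladd, Hx, Hy. ring.
  - intros a x Hx. rewrite Lsc, Hx. ring.
Qed.

Lemma functional_kernel_closed : hclosed (fun f => l f = RtoC 0).
Proof.
  intros x Hx. apply Cmod_eq_0. apply Rle_antisym; [|apply Cmod_ge_0].
  apply Rnot_lt_le. intro Hp.
  set (c' := Rabs c + 1).
  assert (Hc' : 0 < c') by (unfold c'; pose proof (Rabs_pos c); lra).
  destruct (Hx (Cmod (l x) / c')) as [m [Km Hm]]. apply Rdiv_lt_0_compat; lra.
  pose proof (Lb (minus x m)) as B. rewrite functional_minus, Km in B.
  replace (Cminus (l x) (RtoC 0)) with (l x) in B by ring.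
  assert (c * nrm (minus x m) <= c' * nrm (minus x m)).
  { apply Rmult_le_compat_r. apply hnorm_ge0. unfold c'. pose proof (Rle_abs c). lra. }
  assert (c' * nrm (minus x m) < Cmod (l x)).
  { apply Rmult_lt_reg_l with (/ c'). apply Rinv_0_lt_compat; lra.
    rewrite <- Rmult_assoc, Rinv_l, Rmult_1_l by lra. unfold Rdiv in Hm. lra. }
  lra.
Qed.

Lemma Riesz_representation : exists w, forall f, ip f w = l f.
Proof.
  set (K := fun f => l f = RtoC 0).
  destruct (classic (forall f, l f = RtoC 0)) as [Z|NZ].
  { exists zero. intro f. rewrite Z. apply hinner_zero_r. }
  apply not_all_ex_not in NZ. destruct NZ as [f0 Hf0].
  destruct (orthogonal_projection K functional_kernel_subspace functional_kernel_closed f0)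
    as [p [Kp [_ [_ Hperp]]]].
  (* z = f0 - p is a nonzero vector orthogonal to ker l; the representer is a multiple of z *)
  set (z := minus f0 p).
  assert (Lz : l z <> RtoC 0).
  { unfold z. rewrite functional_minus. unfold K in Kp. rewrite Kp.
    replace (Cminus (l f0) (RtoC 0)) with (l f0) by ring. auto. }
  assert (Nz : 0 < nrm z).
  { destruct (hnorm_ge0 H z) as [P|P]; auto. symmetry in P. apply hnorm_eq0 in P.
    exfalso. apply Lz. rewrite P. apply functional_zero. }
  set (N := nrm z ^ 2).
  assert (HN : 0 < N) by (unfold N; nra).
  exists (scal (Cmult (Cconj (l z)) (RtoC (/ N))) z).
  intro f.
  set (g := minus f (scal (Cdiv (l f) (l z)) z)).
  assert (Kg : K g) by (unfold K, g; rewrite functional_minus, Lsc; field; auto).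
  assert (Pg : ip g z = RtoC 0)
    by (rewrite hinner_sym; fold z in Hperp; rewrite (Hperp g Kg); C_componentwise).
  unfold g in Pg. rewrite hinner_minus_l, hinner_scall in Pg. apply Ceq_minus in Pg.
  rewrite hinner_scalr, Pg, (hinner_self_hnorm H z). fold N.
  rewrite Cmult_conj, Cconj_conj.
  replace (Cconj (RtoC (/ N))) with (RtoC (/ N)) by (apply injective_projections; simpl; ring).
  rewrite (RtoC_inv N) by lra.
  field. split; auto. intro E. apply RtoC_inj in E. lra.
Qed.

End BoundedFunctional.

Lemma orthogonal_projection_sig (M : H -> Prop) : subspace M -> hclosed M ->
  forall x, {p | M p /\ (forall m, M m -> ip p m = ip x m) /\ nrm p <= nrm x /\
    (forall m, M m -> ip (minus x p) m = RtoC 0)}.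
Proof. intros. apply constructive_indefinite_description. apply orthogonal_projection; auto. Qed.

Lemma closed_span_of_dense (V : H -> Prop) (M0 : H -> Prop) (g : R -> H) (d : nat -> R) :
  dense_seq d -> subspace M0 -> (forall x, closed_span V x -> M0 x) ->
  (forall v, M0 v -> forall s, continuous (fun s => ip (g s) v) s) ->
  (forall k, V (g (d k))) -> (forall s, M0 (g s)) -> forall s, closed_span V (g s).
Proof.
  intros Hd HM0 HVM Hwc HV Hg s.
  destruct (orthogonal_projection (closed_span V) (closed_span_subspace V) (closed_span_closed V) (g s))
    as [p [Ap [_ [_ Hperp]]]].
  set (z := minus (g s) p).
  assert (Mz : M0 z) by (apply subspace_minus; auto).
  assert (Hz0 : ip (g s) z = RtoC 0).
  { apply (dense_continuous_eq0 d (fun s => ip (g s) z) Hd (Hwc z Mz)).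
    intro k. rewrite hinner_sym, Hperp. C_componentwise. apply closed_span_incl, HV. }
  assert (Hpz : ip p z = RtoC 0) by (rewrite hinner_sym, Hperp; auto; C_componentwise).
  assert (Hzz : ip z z = RtoC 0) by (unfold z at 1; rewrite hinner_minus_l, Hz0, Hpz; ring).
  apply hinner_def, minus_eq0 in Hzz. rewrite Hzz. auto.
Qed.

(* The scalar [k] allows [L t] to be linear or conjugate-linear in the vector. *)
Lemma weakly_continuous_closed_subspace (L : R -> H -> C) (c : R) :
  (forall t x y, L t (plus x y) = Cplus (L t x) (L t y)) ->
  (forall a x, exists k, forall t, L t (scal a x) = Cmult k (L t x)) ->
  (forall t x, Cmod (L t x) <= c * nrm x) ->
  subspace (fun x => forall t, continuous (fun t => L t x) t) /\
  hclosed (fun x => forall t, continuous (fun t => L t x) t).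
Proof.
  intros Ladd Lsc Lb.
  assert (Lminus : forall t x y, L t (minus x y) = Cminus (L t x) (L t y)).
  { intros t x y. rewrite <- (plus_minus_cancel H y x) at 2. rewrite Ladd. ring. }
  split; [split; [|split]|].
  - intros t. apply continuous_ext with (fun _ => RtoC 0); [|apply continuous_const].
    intro s. pose proof (Lb s zero) as B. rewrite hnorm_zero, Rmult_0_r in B.
    symmetry. apply Cmod_eq_0. pose proof (Cmod_ge_0 (L s zero)). lra.
  - intros x y Hx Hy t. apply continuous_ext with (fun t => Cplus (L t x) (L t y)).
    intro. rewrite Ladd. auto. apply continuous_Cplus; auto.
  - intros a x Hx t. destruct (Lsc a x) as [k Hk].
    apply continuous_ext with (fun t => Cmult k (L t x)). intro. rewrite Hk. auto.
    apply continuous_Cmult; [apply continuous_const| auto].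
  - intros x Hx t. apply continuous_C_eps. intros eps He.
    set (c' := Rabs c + 1).
    assert (Hc' : 0 < c') by (unfold c'; pose proof (Rabs_pos c); lra).
    destruct (Hx (eps / 3 / c')) as [m [Hm Hxm]]. apply Rdiv_lt_0_compat; lra.
    destruct (proj1 (continuous_C_eps _ t) (Hm t) (eps / 3)) as [del [Hdel Hy]]. lra.
    exists del. split; auto. intros y Hyd.
    assert (Bd : forall s, Cmod (Cminus (L s x) (L s m)) < eps / 3).
    { intro s. rewrite <- Lminus. eapply Rle_lt_trans. apply Lb.
      apply Rle_lt_trans with (c' * nrm (minus x m)).
      apply Rmult_le_compat_r. apply hnorm_ge0. unfold c'. pose proof (Rle_abs c). lra.
      apply Rmult_lt_reg_l with (/ c'). apply Rinv_0_lt_compat; lra.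
      rewrite <- Rmult_assoc, Rinv_l, Rmult_1_l by lra. unfold Rdiv in *. lra. }
    pose proof (Bd y). pose proof (Bd t). specialize (Hy y Hyd).
    pose proof (Cmod_minus_triangle (L y x) (L y m) (L t x)) as T1.
    pose proof (Cmod_minus_triangle (L y m) (L t m) (L t x)) as T2.
    rewrite (Cmod_minus_sym (L t m) (L t x)) in T2. lra.
Qed.

End ClosedSubspaces.

(** * Orthonormal systems *)

Fixpoint csum (f : nat -> C) (n : nat) : C :=
  match n with O => RtoC 0 | S n => Cplus (csum f n) (f n) end.
Fixpoint rsum (f : nat -> R) (n : nat) : R :=
  match n with O => 0 | S n => rsum f n + f n end.

Lemma csum_ext f g n : (forall j, (j < n)%nat -> f j = g j) -> csum f n = csum g n.
Proof. intro Hfg. induction n; simpl; auto. rewrite IHn, Hfg; auto. Qed.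
Lemma rsum_ext f g n : (forall j, (j < n)%nat -> f j = g j) -> rsum f n = rsum g n.
Proof. intro Hfg. induction n; simpl; auto. rewrite IHn, Hfg; auto. Qed.
Lemma rsum_plus f g n : rsum (fun j => f j + g j) n = rsum f n + rsum g n.
Proof. induction n; simpl. ring. rewrite IHn. ring. Qed.
Lemma rsum_scal c f n : rsum (fun j => c * f j) n = c * rsum f n.
Proof. induction n; simpl. ring. rewrite IHn. ring. Qed.
Lemma csum_zero f n : (forall j, (j < n)%nat -> f j = RtoC 0) -> csum f n = RtoC 0.
Proof. intro Hf. induction n; simpl; auto. rewrite IHn, Hf; auto. ring. Qed.
Lemma csum_single f n i : (i < n)%nat -> (forall j, (j < n)%nat -> j <> i -> f j = RtoC 0) ->
  csum f n = f i.
Proof.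
  induction n; intros Hi Hz. lia. simpl.
  destruct (Nat.eq_dec i n).
  - subst. rewrite csum_zero. ring. intros j Hj. apply Hz; lia.
  - rewrite IHn by (try lia; intros; apply Hz; lia). rewrite (Hz n) by lia. ring.
Qed.
Lemma csum_re f n : Re (csum f n) = rsum (fun j => Re (f j)) n.
Proof. induction n; simpl; auto. rewrite <- IHn. auto. Qed.
Lemma csum_im f n : Im (csum f n) = rsum (fun j => Im (f j)) n.
Proof. induction n; simpl; auto. rewrite <- IHn. auto. Qed.
Lemma rsum_nonneg f n : (forall j, 0 <= f j) -> 0 <= rsum f n.
Proof. intro Hf. induction n; simpl. lra. specialize (Hf n). lra. Qed.
Lemma rsum_mono f n m : (forall j, 0 <= f j) -> (n <= m)%nat -> rsum f n <= rsum f m.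
Proof. intros Hf Hnm. induction Hnm; simpl. lra. specialize (Hf m). lra. Qed.
Lemma sum_n_rsum (f : nat -> R) N : sum_n f N = rsum f (S N).
Proof. induction N. simpl. rewrite sum_O. ring. rewrite sum_Sn, IHN. simpl. reflexivity. Qed.
Lemma sum_n_csum (f : nat -> C) N : sum_n f N = csum f (S N).
Proof. induction N. simpl. rewrite sum_O. apply injective_projections; simpl; ring.
  rewrite sum_Sn, IHN. simpl. reflexivity. Qed.

Section OrthonormalSystems.
Variable H : Hilbert.
Notation ip := (hinner H).
Notation nrm := (hnorm H).
Notation HG := (ModuleSpace.AbelianGroup C_Ring (hcar H)).

Fixpoint hsum (f : nat -> H) (n : nat) : H :=
  match n with O => zero | S n => plus (hsum f n) (f n) end.

Lemma hsum_ext f g n : (forall j, (j < n)%nat -> f j = g j) -> hsum f n = hsum g n.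
Proof. intro Hfg. induction n; simpl; auto. rewrite IHn, Hfg; auto. Qed.

Lemma hinner_hsum_l f n y : ip (hsum f n) y = csum (fun j => ip (f j) y) n.
Proof. induction n; simpl. apply hinner_zero_l. rewrite hinner_addl, IHn. auto. Qed.
Lemma hinner_hsum_r f n y : ip y (hsum f n) = csum (fun j => ip y (f j)) n.
Proof. induction n; simpl. apply hinner_zero_r. rewrite hinner_addr, IHn. auto. Qed.

Lemma hsum_plus f g n : hsum (fun j => plus (f j) (g j)) n = plus (hsum f n) (hsum g n).
Proof.
  induction n; simpl. symmetry. apply (plus_zero_l (G:=HG)).
  rewrite IHn. apply plus_plus_swap.
Qed.

Lemma hsum_scal a f n : hsum (fun j => scal a (f j)) n = scal a (hsum f n).
Proof.
  induction n; simpl. symmetry. exact (scal_zero_r (K:=C_Ring) (V:=H) a).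
  rewrite IHn. symmetry. apply hscal_distr_l.
Qed.

Lemma hsum_extend f n m : (n <= m)%nat -> (forall j, (n <= j)%nat -> f j = zero) -> hsum f m = hsum f n.
Proof.
  intros Hnm Hz. induction Hnm; auto. simpl. rewrite IHHnm, Hz by lia. apply hplus_zero_r.
Qed.

Lemma minus_plus_plus (a b c d : H) : minus (plus a b) (plus c d) = plus (minus a c) (minus b d).
Proof. symmetry. apply plus_minus_minus. Qed.

Lemma minus_scal_scal (a : C) (x y : H) : minus (scal a x) (scal a y) = scal a (minus x y).
Proof. symmetry. apply hscal_minus_distr_l. Qed.

(* Each [e i] is a unit vector or zero: Gram-Schmidt sends dependent vectors to zero. *)
Definition orthonormal_upto (e : nat -> H) (N : nat) : Prop :=
  (forall i j, (i < N)%nat -> (j < N)%nat -> i <> j -> ip (e i) (e j) = RtoC 0) /\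
  (forall i, (i < N)%nat -> e i = zero \/ ip (e i) (e i) = RtoC 1).

Definition orthonormal (e : nat -> H) : Prop := forall N, orthonormal_upto e N.

Definition fourier (e : nat -> H) (N : nat) (x : H) : H :=
  hsum (fun j => scal (ip x (e j)) (e j)) N.

Definition in_span (e : nat -> H) (N : nat) (z : H) : Prop :=
  exists c : nat -> C, z = hsum (fun j => scal (c j) (e j)) N.

Lemma fourier_coef_unit e N x i : orthonormal_upto e N -> (i < N)%nat -> Cmult (ip x (e i)) (ip (e i) (e i)) = ip x (e i).
Proof.
  intros [_ Hn] Hi. destruct (Hn i Hi) as [Z|U].
  - rewrite Z, hinner_zero_r. ring.
  - rewrite U. ring.
Qed.

Lemma hinner_fourier_basis e N x i : orthonormal_upto e N -> (i < N)%nat -> ip (fourier e N x) (e i) = ip x (e i).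
Proof.
  intros HO Hi. unfold fourier. rewrite hinner_hsum_l.
  rewrite (csum_single _ N i Hi).
  - rewrite hinner_scall. apply (fourier_coef_unit e N x i HO Hi).
  - intros j Hj Hji. rewrite hinner_scall. destruct HO as [Ho _]. rewrite Ho; auto. ring.
Qed.

Lemma fourier_residual_perp_basis e N x i : orthonormal_upto e N -> (i < N)%nat -> ip (minus x (fourier e N x)) (e i) = RtoC 0.
Proof. intros. rewrite hinner_minus_l, hinner_fourier_basis; auto. ring. Qed.

Lemma fourier_residual_perp_span e N x z : orthonormal_upto e N -> in_span e N z -> ip (minus x (fourier e N x)) z = RtoC 0.
Proof.
  intros HO [c ->]. rewrite hinner_hsum_r. apply csum_zero. intros j Hj.
  rewrite hinner_scalr, fourier_residual_perp_basis; auto. ring.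
Qed.

Lemma fourier_in_span e N x : in_span e N (fourier e N x).
Proof. exists (fun j => ip x (e j)). reflexivity. Qed.

Lemma in_span_minus e N z1 z2 : in_span e N z1 -> in_span e N z2 -> in_span e N (minus z1 z2).
Proof.
  intros [c1 ->] [c2 ->]. exists (fun j => Cminus (c1 j) (c2 j)).
  induction N; simpl. first [apply minus_diag | symmetry; apply minus_diag].
  rewrite minus_plus_plus, IHN. f_equal.
  unfold Cminus. rewrite hscal_distr_r. unfold minus. f_equal.
  rewrite <- (scal_opp_l (K:=C_Ring)). reflexivity.
Qed.

Lemma fourier_Pythagoras e N x : orthonormal_upto e N -> nrm x ^ 2 = nrm (fourier e N x) ^ 2 + nrm (minus x (fourier e N x)) ^ 2.
Proof.
  intro HO. rewrite <- (plus_minus_cancel H (fourier e N x) x) at 1. apply Pythagoras.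
  rewrite hinner_sym, fourier_residual_perp_span; auto. apply injective_projections; simpl; ring.
  apply fourier_in_span.
Qed.

Lemma hnorm_fourier_le e N x : orthonormal_upto e N -> nrm (fourier e N x) <= nrm x.
Proof.
  intro HO. pose proof (fourier_Pythagoras e N x HO). apply Rsqr_incr_0_var. unfold Rsqr.
  pose proof (pow2_ge_0 (nrm (minus x (fourier e N x)))). nra. apply hnorm_ge0.
Qed.

Lemma hnorm_fourier_sq e N x : orthonormal_upto e N -> nrm (fourier e N x) ^ 2 = rsum (fun j => Cmod (ip x (e j)) ^ 2) N.
Proof.
  intro HO. rewrite hnorm_sq. unfold fourier at 1. rewrite hinner_hsum_l, csum_re. apply rsum_ext.
  intros j Hj. rewrite hinner_scall, (hinner_sym H (fourier e N x) (e j)), hinner_fourier_basis; auto.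
  rewrite Cmod2_alt. destruct (ip x (e j)). simpl. ring.
Qed.

Lemma Bessel e N x : orthonormal_upto e N -> rsum (fun j => Cmod (ip x (e j)) ^ 2) N <= nrm x ^ 2.
Proof.
  intro HO. rewrite <- hnorm_fourier_sq by auto. pose proof (fourier_Pythagoras e N x HO).
  pose proof (pow2_ge_0 (nrm (minus x (fourier e N x)))). lra.
Qed.

Lemma fourier_best_approx e N x z : orthonormal_upto e N -> in_span e N z -> nrm (minus x (fourier e N x)) <= nrm (minus x z).
Proof.
  intros HO Hz.
  assert (E : minus x z = plus (minus x (fourier e N x)) (minus (fourier e N x) z)).
  { apply minus_trans. }
  assert (P : nrm (minus x z) ^ 2 = nrm (minus x (fourier e N x)) ^ 2 + nrm (minus (fourier e N x) z) ^ 2).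
  { rewrite E. apply Pythagoras. apply fourier_residual_perp_span; auto. apply in_span_minus; auto. apply fourier_in_span. }
  apply Rsqr_incr_0_var. unfold Rsqr. pose proof (pow2_ge_0 (nrm (minus (fourier e N x) z))). nra.
  apply hnorm_ge0.
Qed.

Lemma in_span_mono e N M z : (N <= M)%nat -> in_span e N z -> in_span e M z.
Proof.
  intros HNM [c ->]. exists (fun j => if Nat.ltb j N then c j else RtoC 0).
  transitivity (hsum (fun j => scal (if Nat.ltb j N then c j else RtoC 0) (e j)) N).
  - apply hsum_ext. intros j Hj. apply Nat.ltb_lt in Hj. rewrite Hj. auto.
  - symmetry. apply hsum_extend; auto. intros j Hj.
    replace (Nat.ltb j N) with false by (symmetry; apply Nat.ltb_ge; lia). apply hscal_zero_l.
Qed.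

Lemma fourier_plus e N x y : fourier e N (plus x y) = plus (fourier e N x) (fourier e N y).
Proof.
  unfold fourier. rewrite <- hsum_plus. apply hsum_ext. intros j _.
  rewrite hinner_addl, hscal_distr_r. auto.
Qed.

Lemma fourier_scal e N a x : fourier e N (scal a x) = scal a (fourier e N x).
Proof.
  unfold fourier. rewrite <- hsum_scal. apply hsum_ext. intros j _.
  rewrite hinner_scall, hscal_assoc. auto.
Qed.

Lemma fourier_minus e N x y : fourier e N (minus x y) = minus (fourier e N x) (fourier e N y).
Proof.
  unfold minus. rewrite fourier_plus. f_equal.
  rewrite <- (scal_opp_one (K:=C_Ring)). rewrite fourier_scal. apply (scal_opp_one (K:=C_Ring)).
Qed.

Definition fourier_cvg (e : nat -> H) (x : H) : Prop :=
  forall eps, 0 < eps -> exists N, forall M, (N <= M)%nat -> nrm (minus x (fourier e M x)) < eps.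

Lemma fourier_cvg_closed_subspace e : orthonormal e -> subspace H (fourier_cvg e) /\ hclosed H (fourier_cvg e).
Proof.
  intro HO. split; [split; [|split]|].
  - intros eps He. exists O. intros M _. unfold fourier.
    replace (hsum (fun j => scal (ip zero (e j)) (e j)) M) with (zero : H).
    rewrite minus_diag, hnorm_zero. auto.
    symmetry. rewrite (hsum_ext _ (fun j => scal (RtoC 0) (e j))).
    rewrite hsum_scal. apply hscal_zero_l. intros. rewrite hinner_zero_l. auto.
  - intros x y Hx Hy eps He.
    destruct (Hx (eps/2)) as [N1 H1]. lra. destruct (Hy (eps/2)) as [N2 H2]. lra.
    exists (Nat.max N1 N2). intros M HM.
    rewrite fourier_plus, minus_plus_plus. eapply Rle_lt_trans. apply hnorm_triangle.
    pose proof (H1 M ltac:(lia)). pose proof (H2 M ltac:(lia)). lra.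
  - intros a x Hx eps He.
    destruct (Hx (eps / (Cmod a + 1))) as [N1 H1].
    apply Rdiv_lt_0_compat; [lra| pose proof (Cmod_ge_0 a); lra].
    exists N1. intros M HM. rewrite fourier_scal, minus_scal_scal, hnorm_scal.
    pose proof (H1 M HM) as HxM. pose proof (Cmod_ge_0 a). pose proof (hnorm_ge0 H (minus x (fourier e M x))).
    apply Rle_lt_trans with ((Cmod a + 1) * nrm (minus x (fourier e M x))). nra.
    apply Rmult_lt_reg_l with (/ (Cmod a + 1)). apply Rinv_0_lt_compat; lra.
    rewrite <- Rmult_assoc, Rinv_l, Rmult_1_l by lra. unfold Rdiv in HxM. lra.
  - intros x Hx eps He.
    destruct (Hx (eps/3)) as [y [Hy Hxy]]. lra.
    destruct (Hy (eps/3)) as [N HN]. lra.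
    exists N. intros M HM.
    assert (E : minus x (fourier e M x) =
      plus (minus x y) (plus (minus y (fourier e M y)) (fourier e M (minus y x)))).
    { rewrite fourier_minus. rewrite (minus_trans y x (fourier e M x)).
      f_equal. apply minus_trans. }
    rewrite E. eapply Rle_lt_trans. apply hnorm_triangle.
    eapply Rle_lt_trans. apply Rplus_le_compat_l. apply hnorm_triangle.
    pose proof (hnorm_fourier_le e M (minus y x) (HO M)) as Hf. rewrite hnorm_minus_sym in Hf.
    pose proof (HN M HM). lra.
Qed.

Lemma fourier_cvg_of_in_span e N z : orthonormal e -> in_span e N z -> fourier_cvg e z.
Proof.
  intros HO Hz eps He. exists N. intros M HM.
  eapply Rle_lt_trans. apply fourier_best_approx with (z := z). apply HO.
  apply in_span_mono with N; auto. rewrite minus_diag, hnorm_zero. auto.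
Qed.

Section GramSchmidt.
Variable v : nat -> H.

Definition gram_schmidt_next (g : nat -> H) (n : nat) : H :=
  let r := minus (v n) (hsum (fun j => scal (ip (v n) (g j)) (g j)) n) in
  if Req_EM_T (nrm r) 0 then zero else scal (RtoC (/ nrm r)) r.

Fixpoint gram_schmidt_upto (n : nat) : nat -> H :=
  match n with
  | O => fun _ => zero
  | S n => fun j => if Nat.eq_dec j n then gram_schmidt_next (gram_schmidt_upto n) n else gram_schmidt_upto n j
  end.

Definition gram_schmidt (k : nat) : H := gram_schmidt_upto (S k) k.

Lemma gram_schmidt_upto_stable n j : (j < n)%nat -> gram_schmidt_upto n j = gram_schmidt j.
Proof.
  induction n; intros Hj. lia. simpl. destruct (Nat.eq_dec j n).
  - subst. unfold gram_schmidt. simpl. destruct (Nat.eq_dec n n); [auto| congruence].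
  - apply IHn. lia.
Qed.

Lemma gram_schmidt_eq n : gram_schmidt n =
  let r := minus (v n) (fourier gram_schmidt n (v n)) in
  if Req_EM_T (nrm r) 0 then zero else scal (RtoC (/ nrm r)) r.
Proof.
  unfold gram_schmidt. simpl. destruct (Nat.eq_dec n n); [|congruence]. unfold gram_schmidt_next, fourier.
  rewrite (hsum_ext _ (fun j => scal (ip (v n) (gram_schmidt j)) (gram_schmidt j))). auto.
  intros j Hj. rewrite gram_schmidt_upto_stable; auto.
Qed.

Lemma gram_schmidt_orthonormal_upto : forall N, orthonormal_upto gram_schmidt N.
Proof.
  induction N.
  - split; intros; lia.
  - assert (Hn : (forall i, (i < N)%nat -> ip (gram_schmidt N) (gram_schmidt i) = RtoC 0) /\
                 (gram_schmidt N = zero \/ ip (gram_schmidt N) (gram_schmidt N) = RtoC 1)).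
    { rewrite (gram_schmidt_eq N). simpl.
      set (r := minus (v N) (fourier gram_schmidt N (v N))).
      destruct (Req_EM_T (nrm r) 0) as [Z|NZ].
      - split. intros. apply hinner_zero_l. left; auto.
      - split.
        + intros i Hi. rewrite hinner_scall. unfold r. rewrite fourier_residual_perp_basis; auto. ring.
        + right. rewrite hinner_scall, hinner_scalr, (hinner_self_hnorm H r).
          apply injective_projections; simpl; field; auto. }
    destruct IHN as [Ho Hn']. destruct Hn as [Hn1 Hn2]. split.
    + intros i j Hi Hj Hij.
      destruct (Nat.eq_dec i N); destruct (Nat.eq_dec j N); subst; try congruence.
      * apply Hn1; lia.
      * rewrite hinner_sym, Hn1 by lia. apply injective_projections; simpl; ring.
      * apply Ho; lia.
    + intros i Hi. destruct (Nat.eq_dec i N). subst; auto. apply Hn'; lia.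
Qed.

Lemma gram_schmidt_orthonormal : orthonormal gram_schmidt.
Proof. intro N. apply gram_schmidt_orthonormal_upto. Qed.

Lemma gram_schmidt_spans n : in_span gram_schmidt (S n) (v n).
Proof.
  pose proof (gram_schmidt_eq n) as E. simpl in E.
  set (r := minus (v n) (fourier gram_schmidt n (v n))) in E.
  destruct (Req_EM_T (nrm r) 0) as [Z|NZ].
  - exists (fun j => if Nat.ltb j n then ip (v n) (gram_schmidt j) else RtoC 0).
    simpl. rewrite Nat.ltb_irrefl, hscal_zero_l, hplus_zero_r.
    apply hnorm_eq0 in Z. unfold r in Z.
    assert (Ev : v n = fourier gram_schmidt n (v n)).
    { pose proof (plus_minus_cancel H (fourier gram_schmidt n (v n)) (v n)) as Q. rewrite Z, hplus_zero_r in Q. auto. }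
    rewrite Ev at 1. unfold fourier. apply hsum_ext. intros j Hj. apply Nat.ltb_lt in Hj. rewrite Hj. auto.
  - exists (fun j => if Nat.ltb j n then ip (v n) (gram_schmidt j) else RtoC (nrm r)).
    simpl. rewrite Nat.ltb_irrefl.
    assert (Ev : v n = plus (fourier gram_schmidt n (v n)) r) by (symmetry; apply plus_minus_cancel).
    rewrite Ev at 1. f_equal.
    + unfold fourier. apply hsum_ext. intros j Hj. apply Nat.ltb_lt in Hj. rewrite Hj. auto.
    + rewrite E, hscal_assoc, <- RtoC_mult, Rinv_r, hscal_one; auto.
Qed.

Lemma gram_schmidt_in M : subspace H M -> (forall k, M (v k)) -> forall n, M (gram_schmidt n).
Proof.
  intros HM Hv. intro n. induction n as [n IH] using lt_wf_ind.
  rewrite gram_schmidt_eq. simpl. destruct (Req_EM_T _ 0). apply HM.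
  apply HM. apply subspace_minus; auto.
  unfold fourier. clear -HM IH.
  assert (Hm : forall m, (m <= n)%nat ->
            M (hsum (fun j => scal (ip (v n) (gram_schmidt j)) (gram_schmidt j)) m)).
  { induction m; intros. simpl. apply HM. simpl. apply HM. apply IHm. lia. apply HM. apply IH. lia. }
  apply Hm. lia.
Qed.

End GramSchmidt.


End OrthonormalSystems.

Lemma is_series_R_eps (a : nat -> R) (l : R) :
  is_series a l <-> forall eps, 0 < eps -> exists N, forall n, (N <= n)%nat -> Rabs (sum_n a n - l) < eps.
Proof.
  split.
  - intros Hs eps He. destruct (proj1 (filterlim_locally (sum_n a) l) Hs (mkposreal _ He)) as [N HN].
    exists N. intros n Hn. apply HN in Hn. exact Hn.
  - intros Hd. apply filterlim_locally. intro eps. destruct (Hd eps (cond_pos eps)) as [N HN].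
    exists N. intros n Hn. apply HN. auto.
Qed.

Lemma series_of_bounded_partial_sums (a : nat -> R) (B : R) :
  (forall n, 0 <= a n) -> (forall N, rsum a N <= B) -> ex_series a /\ Series a <= B.
Proof.
  intros Hp Hb.
  assert (Hinc : forall n, sum_n a n <= sum_n a (S n)).
  { intro n. rewrite sum_Sn. specialize (Hp (S n)). simpl. unfold plus; simpl. lra. }
  assert (Hbd : forall n, sum_n a n <= B) by (intro n; rewrite sum_n_rsum; auto).
  destruct (ex_finite_lim_seq_incr _ B Hinc Hbd) as [l Hl].
  assert (Hs : is_series a l).
  { apply is_series_R_eps. intros eps He. apply is_lim_seq_spec in Hl.
    destruct (Hl (mkposreal _ He)) as [N HN]. exists N. intros n Hn. apply HN; auto. }
  split. exists l. auto.
  rewrite (is_series_unique a l Hs).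
  assert (Rbar_le l B).
  { apply (is_lim_seq_le (sum_n a) (fun _ => B) l B); auto. apply is_lim_seq_const. }
  simpl in H. auto.
Qed.

Lemma rsum_le_Series (a : nat -> R) N :
  (forall n, 0 <= a n) -> ex_series a -> rsum a N <= Series a.
Proof.
  intros Hp [l Hl]. rewrite (is_series_unique a l Hl).
  apply Rnot_lt_le. intro Hlt.
  destruct (proj1 (is_series_R_eps a l) Hl (rsum a N - l)) as [M HM]. lra.
  specialize (HM (Nat.max M N) ltac:(lia)). rewrite sum_n_rsum in HM.
  pose proof (rsum_mono a N (S (Nat.max M N)) Hp ltac:(lia)).
  apply Rabs_def2 in HM. lra.
Qed.

Lemma rsum_Cauchy (a : nat -> R) :
  ex_series a -> forall eps, 0 < eps -> exists N, forall n m, (N <= n)%nat -> (N <= m)%nat ->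
    Rabs (rsum a n - rsum a m) < eps.
Proof.
  intros [l Hl] eps He.
  destruct (proj1 (is_series_R_eps a l) Hl (eps/2)) as [M HM]. lra.
  exists (S M). intros n m Hn Hm.
  destruct n. lia. destruct m. lia.
  rewrite <- !sum_n_rsum. pose proof (HM n ltac:(lia)) as Hn'. pose proof (HM m ltac:(lia)) as Hm'.
  apply Rabs_def2 in Hn'. apply Rabs_def2 in Hm'. apply Rabs_def1; lra.
Qed.


Lemma rsum_le f g n : (forall j, (j < n)%nat -> f j <= g j) -> rsum f n <= rsum g n.
Proof.
  intro Hfg. induction n; simpl; [lra|].
  pose proof (Hfg n ltac:(lia)). pose proof (IHn ltac:(intros; apply Hfg; lia)). lra.
Qed.

Lemma rsum_tail (f : nat -> R) N M : (N <= M)%nat ->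
  rsum (fun n => if Nat.leb N n then f n else 0) M = rsum f M - rsum f N.
Proof.
  intro HNM. induction HNM.
  - rewrite (rsum_ext _ (fun _ => 0)). clear. induction N; simpl; lra.
    intros j Hj. replace (Nat.leb N j) with false by (symmetry; apply Nat.leb_gt; lia). auto.
  - simpl. rewrite IHHNM. replace (Nat.leb N m) with true by (symmetry; apply Nat.leb_le; lia). ring.
Qed.

Lemma hnorm_orthonormal_le1 (H : Hilbert) (e : nat -> H) : orthonormal H e -> forall m, hnorm H (e m) <= 1.
Proof.
  intros HO m. destruct (HO (S m)) as [_ Hn]. destruct (Hn m ltac:(lia)) as [Z|U].
  - rewrite Z, hnorm_zero. lra.
  - unfold hnorm. rewrite U. simpl. rewrite sqrt_1. lra.
Qed.

Section Synthesis.
Variables (H : Hilbert) (e : nat -> H) (x : nat -> C).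
Hypotheses (He : orthonormal H e) (Hx : ex_series (fun n => Cmod (x n) ^ 2)).

Definition synthesis (N : nat) : H := hsum H (fun n => scal (x n) (e n)) N.

Lemma hnorm_synthesis_le (c : nat -> C) M :
  hnorm H (hsum H (fun n => scal (c n) (e n)) M) ^ 2 <= rsum (fun n => Cmod (c n) ^ 2) M.
Proof.
  destruct (He M) as [Ho Hn].
  set (z := hsum H (fun n => scal (c n) (e n)) M).
  assert (Hz : forall j, (j < M)%nat -> hinner H (e j) z = Cmult (Cconj (c j)) (hinner H (e j) (e j))).
  { intros j Hj. unfold z. rewrite hinner_hsum_r, (csum_single _ M j Hj), hinner_scalr; auto.
    intros i Hi Hij. rewrite hinner_scalr, Ho; auto. ring. }
  rewrite hnorm_sq. unfold z at 1. rewrite hinner_hsum_l, csum_re. apply rsum_le.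
  intros j Hj. rewrite hinner_scall, Hz, Cmod2_alt by auto.
  destruct (Hn j Hj) as [Z|U].
  - rewrite Z, hinner_zero_l. destruct (c j). simpl. nra.
  - rewrite U. destruct (c j). simpl. nra.
Qed.

Lemma synthesis_minus N M : (N <= M)%nat -> minus (synthesis M) (synthesis N) =
  hsum H (fun n => scal (if Nat.leb N n then x n else RtoC 0) (e n)) M.
Proof.
  intro HNM.
  assert (E1 : synthesis M = plus (hsum H (fun n => scal (if Nat.ltb n N then x n else RtoC 0) (e n)) M)
                        (hsum H (fun n => scal (if Nat.leb N n then x n else RtoC 0) (e n)) M)).
  { unfold synthesis. rewrite <- hsum_plus. apply hsum_ext. intros j _.
    rewrite <- hscal_distr_r. f_equal.
    destruct (Nat.ltb_spec j N); destruct (Nat.leb_spec N j); try lia; ring. }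
  assert (E2 : hsum H (fun n => scal (if Nat.ltb n N then x n else RtoC 0) (e n)) M = synthesis N).
  { rewrite (hsum_extend H _ N M HNM).
    - unfold synthesis. apply hsum_ext. intros j Hj. apply Nat.ltb_lt in Hj. rewrite Hj. auto.
    - intros j Hj. replace (Nat.ltb j N) with false by (symmetry; apply Nat.ltb_ge; lia).
      apply hscal_zero_l. }
  rewrite E1, E2. apply minus_plus_cancel_l.
Qed.

Lemma synthesis_Cauchy : forall eps, 0 < eps -> exists N : nat, forall m n, (N <= m)%nat -> (N <= n)%nat ->
  sqrt (Re (hinner H (minus (synthesis m) (synthesis n)) (minus (synthesis m) (synthesis n)))) < eps.
Proof.
  set (ax := fun n => Cmod (x n) ^ 2).
  assert (Hdn : forall N M, (N <= M)%nat ->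
            hnorm H (minus (synthesis M) (synthesis N)) ^ 2 <= rsum ax M - rsum ax N).
  { intros N M HNM. rewrite synthesis_minus by auto. eapply Rle_trans. apply hnorm_synthesis_le.
    rewrite <- rsum_tail by auto. apply rsum_le. intros j _. unfold ax.
    destruct (Nat.leb N j). lra. rewrite Cmod_0. simpl. lra. }
  intros eps He'. destruct (rsum_Cauchy ax Hx (eps ^ 2)) as [N HN]. apply pow_lt; lra.
  exists N. intros m n Hm Hn. fold (hnorm H (minus (synthesis m) (synthesis n))).
  assert (hnorm H (minus (synthesis m) (synthesis n)) ^ 2 < eps ^ 2).
  { pose proof (HN m n Hm Hn) as Hmn. apply Rabs_def2 in Hmn.
    destruct (Nat.le_ge_cases n m) as [Hnm|Hmn'].
    - pose proof (Hdn n m Hnm). lra.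
    - rewrite hnorm_minus_sym. pose proof (Hdn m n Hmn'). lra. }
  pose proof (hnorm_ge0 H (minus (synthesis m) (synthesis n))). nra.
Qed.

Lemma synthesis_limit : exists l : H,
  (forall eps, 0 < eps -> exists N : nat, forall n, (N <= n)%nat ->
     hnorm H (minus (synthesis n) l) < eps) /\
  hnorm H l ^ 2 <= Series (fun n => Cmod (x n) ^ 2).
Proof.
  destruct (hcomplete H synthesis synthesis_Cauchy) as [l Hl].
  set (Sx := Series (fun n => Cmod (x n) ^ 2)).
  assert (HgN : forall N, hnorm H (synthesis N) ^ 2 <= Sx).
  { intro N. eapply Rle_trans. apply hnorm_synthesis_le.
    apply rsum_le_Series; auto. intro; apply pow2_ge_0. }
  assert (HSx : 0 <= Sx) by (pose proof (HgN O); pose proof (pow2_ge_0 (hnorm H (synthesis O))); lra).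
  exists l. split; [exact Hl|].
  assert (hnorm H l <= sqrt Sx).
  { apply Rnot_lt_le. intro Hlt.
    destruct (Hl (hnorm H l - sqrt Sx)) as [N HN]. lra.
    specialize (HN N (le_n N)). fold (hnorm H (minus (synthesis N) l)) in HN.
    pose proof (hnorm_triangle H (synthesis N) (minus l (synthesis N))) as T.
    rewrite plus_minus_cancel, hnorm_minus_sym in T.
    assert (hnorm H (synthesis N) <= sqrt Sx).
    { apply Rsqr_incr_0_var; [|apply sqrt_pos].
      unfold Rsqr. rewrite sqrt_sqrt by auto. pose proof (HgN N). lra. }
    lra. }
  pose proof (hnorm_ge0 H l). assert (Hp : hnorm H l ^ 2 <= sqrt Sx ^ 2) by (apply pow_incr; lra).
  rewrite pow2_sqrt in Hp by auto. auto.
Qed.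

End Synthesis.

Section OperatorMatrix.
Variables (E F : Hilbert) (ee : nat -> E) (ff : nat -> F) (T : F -> E).
Hypotheses (Hee : orthonormal E ee) (Hff : orthonormal F ff) (HT : Clinear F E T)
  (HTb : forall x, hnorm E (T x) <= hnorm F x).

Lemma linear_zero : T zero = zero.
Proof. destruct HT as [_ Hs]. rewrite <- (hscal_zero_l F zero), Hs. apply hscal_zero_l. Qed.

Lemma linear_hsum f n : T (hsum F f n) = hsum E (fun j => T (f j)) n.
Proof. induction n; simpl. apply linear_zero. destruct HT as [Ha _]. rewrite Ha, IHn. auto. Qed.

Lemma linear_minus x y : T (minus x y) = minus (T x) (T y).
Proof.
  destruct HT as [Ha Hs]. unfold minus. rewrite Ha.
  rewrite <- (scal_opp_one (K:=C_Ring) y), Hs. rewrite (scal_opp_one (K:=C_Ring)). auto.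
Qed.

Lemma operator_matrix_l2_contraction : l2_contraction (fun m n => hinner E (T (ff n)) (ee m)).
Proof.
  intros x Hx.
  destruct (synthesis_limit F ff x Hff Hx) as [gl [Hgl Hgl2]].
  assert (Hbes : forall N, rsum (fun m => Cmod (hinner E (T gl) (ee m)) ^ 2) N <= hnorm F gl ^ 2).
  { intro N. eapply Rle_trans. apply Bessel. apply Hee. pose proof (HTb gl).
    pose proof (hnorm_ge0 E (T gl)). apply pow_incr. lra. }
  destruct (series_of_bounded_partial_sums _ _ (fun m => pow2_ge_0 _) Hbes) as [Hex HS].
  exists (fun m => hinner E (T gl) (ee m)). split; [|split; [exact Hex | lra]].
  intro m. apply is_series_C_eps. intros eps He.
  destruct (Hgl eps He) as [N HN]. exists N. intros n Hn.
  rewrite sum_n_csum.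
  assert (Ec : csum (fun n => Cmult (hinner E (T (ff n)) (ee m)) (x n)) (S n)
               = hinner E (T (synthesis F ff x (S n))) (ee m)).
  { unfold synthesis. rewrite linear_hsum, hinner_hsum_l. apply csum_ext. intros j _.
    destruct HT as [_ Hs]. rewrite Hs, hinner_scall. apply Cmult_comm. }
  rewrite Ec, <- hinner_minus_l, <- linear_minus.
  eapply Rle_lt_trans. apply Cauchy_Schwarz. pose proof (hnorm_orthonormal_le1 E ee Hee m).
  pose proof (HTb (minus (synthesis F ff x (S n)) gl)).
  pose proof (hnorm_ge0 E (T (minus (synthesis F ff x (S n)) gl))).
  specialize (HN (S n) ltac:(lia)).
  pose proof (hnorm_ge0 E (ee m)). nra.
Qed.

End OperatorMatrix.

(** * Continuous factorization of separately continuous functions *)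

Definition continuous_l2_factorization (phi : R -> R -> R -> C) : Prop :=
  exists (a : nat -> R -> C) (th : nat -> nat -> R -> C) (b : nat -> R -> C),
    (forall m s, continuous (a m) s) /\
    (forall m n t, continuous (th m n) t) /\
    (forall n u, continuous (b n) u) /\
    (forall s N, sum_n (fun m => (Cmod (a m s))^2) N <= 1) /\
    (forall u N, sum_n (fun n => (Cmod (b n u))^2) N <= 1) /\
    (forall t, l2_contraction (fun m n => th m n t)) /\
    (forall s t u, exists y : nat -> C,
        (forall m, is_series (fun n => Cmult (th m n t) (b n u)) (y m)) /\
        is_series (fun m => Cmult (a m s) (Cconj (y m))) (phi s t u)).

Lemma weakly_continuous_hinner (H : Hilbert) (a : R -> H) (c : R) : (forall s, hnorm H (a s) <= c) ->
  subspace H (fun v => forall s, continuous (fun s => hinner H (a s) v) s) /\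
  hclosed H (fun v => forall s, continuous (fun s => hinner H (a s) v) s).
Proof.
  intro Hc. apply (weakly_continuous_closed_subspace H (fun s v => hinner H (a s) v) c).
  - intros. apply hinner_addr.
  - intros a0 x. exists (Cconj a0). intro t. apply hinner_scalr.
  - intros t x. apply Cmod_hinner_le. auto.
Qed.

Section ContinuousFactorization.
Variables (E F : Hilbert) (alpha : R -> E) (theta : R -> F -> E) (beta : R -> F)
  (phi : R -> R -> R -> C) (d : nat -> R).
Hypotheses (Hsc : sep_continuous phi) (Hlin : forall t, Clinear F E (theta t))
  (Ha : forall s, hnorm E (alpha s) <= 1)
  (Ht : forall t (x : F), hnorm E (theta t x) <= hnorm F x)
  (Hb : forall u, hnorm F (beta u) <= 1)
  (Hphi : forall s t u, phi s t u = hinner E (alpha s) (theta t (beta u)))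
  (Hd : dense_seq d).

Lemma theta_plus t x y : theta t (plus x y) = plus (theta t x) (theta t y).
Proof. apply (Hlin t). Qed.

Lemma theta_scal t c x : theta t (scal c x) = scal c (theta t x).
Proof. apply (Hlin t). Qed.

Definition E0 : E -> Prop := closed_span E (fun v => exists t u, v = theta t (beta u)).

Lemma alpha_weakly_continuous_E0 v : E0 v -> forall s, continuous (fun s => hinner E (alpha s) v) s.
Proof.
  destruct (weakly_continuous_hinner E alpha 1 Ha) as [HS HC].
  apply (closed_span_min E _ _ HS HC).
  intros w [t [u ->]] s. apply continuous_ext with (fun s => phi s t u).
  intro. apply Hphi. apply Hsc.
Qed.

Definition alpha_proj (s : R) : E :=
  proj1_sig (orthogonal_projection_sig E E0 (closed_span_subspace E _) (closed_span_closed E _) (alpha s)).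

Lemma alpha_proj_spec s : E0 (alpha_proj s) /\
  (forall m, E0 m -> hinner E (alpha_proj s) m = hinner E (alpha s) m) /\ hnorm E (alpha_proj s) <= 1.
Proof.
  unfold alpha_proj.
  destruct (proj2_sig (orthogonal_projection_sig E E0 (closed_span_subspace E _)
    (closed_span_closed E _) (alpha s))) as [PA [PB [PC _]]].
  pose proof (Ha s). repeat split; auto. lra.
Qed.

Lemma theta_adjoint_alpha_proj s t :
  {w : F | forall f, hinner F f w = hinner E (theta t f) (alpha_proj s)}.
Proof.
  apply constructive_indefinite_description.
  apply (Riesz_representation F (fun f => hinner E (theta t f) (alpha_proj s)) 1).
  - intros. rewrite theta_plus. apply hinner_addl.
  - intros. rewrite theta_scal. apply hinner_scall.
  - intros x. rewrite Cauchy_Schwarz. pose proof (alpha_proj_spec s) as [_ [_ A]].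
    pose proof (Ht t x). pose proof (hnorm_ge0 E (alpha_proj s)).
    pose proof (hnorm_ge0 E (theta t x)). pose proof (hnorm_ge0 F x). nra.
Qed.

Definition F0 : F -> Prop :=
  closed_span F (fun f => exists s t, f = proj1_sig (theta_adjoint_alpha_proj s t)).

Lemma hinner_alpha_proj_theta s t u : hinner E (alpha_proj s) (theta t (beta u)) = phi s t u.
Proof.
  destruct (alpha_proj_spec s) as [_ [A _]].
  rewrite A, Hphi; auto. apply closed_span_incl. exists t, u. auto.
Qed.

Lemma beta_weakly_continuous_F0 f : F0 f -> forall u, continuous (fun u => hinner F (beta u) f) u.
Proof.
  destruct (weakly_continuous_hinner F beta 1 Hb) as [HS HC].
  apply (closed_span_min F _ _ HS HC).
  intros v [s [t ->]] u. apply continuous_ext with (fun u => Cconj (phi s t u)).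
  - intro u'. destruct (theta_adjoint_alpha_proj s t) as [w Hw]. simpl.
    rewrite Hw, hinner_sym, hinner_alpha_proj_theta. reflexivity.
  - apply continuous_Cconj, Hsc.
Qed.

Definition beta_proj (u : R) : F :=
  proj1_sig (orthogonal_projection_sig F F0 (closed_span_subspace F _) (closed_span_closed F _) (beta u)).

Lemma beta_proj_spec u : F0 (beta_proj u) /\
  (forall m, F0 m -> hinner F (beta_proj u) m = hinner F (beta u) m) /\ hnorm F (beta_proj u) <= 1.
Proof.
  unfold beta_proj.
  destruct (proj2_sig (orthogonal_projection_sig F F0 (closed_span_subspace F _)
    (closed_span_closed F _) (beta u))) as [PA [PB [PC _]]].
  pose proof (Hb u). repeat split; auto. lra.
Qed.

Lemma phi_proj s t u : hinner E (alpha_proj s) (theta t (beta_proj u)) = phi s t u.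
Proof.
  destruct (theta_adjoint_alpha_proj s t) as [w Hw] eqn:Ew.
  rewrite (hinner_sym E (theta t (beta_proj u))), <- Hw.
  destruct (beta_proj_spec u) as [_ [B _]].
  rewrite B, Hw, <- hinner_sym.
  - apply hinner_alpha_proj_theta.
  - apply closed_span_incl. exists s, t. rewrite Ew. auto.
Qed.

Lemma alpha_proj_weakly_continuous v : E0 v -> forall s, continuous (fun s => hinner E (alpha_proj s) v) s.
Proof.
  intros Hv s. apply continuous_ext with (fun s => hinner E (alpha s) v).
  intro s'. symmetry. apply (alpha_proj_spec s'), Hv. apply alpha_weakly_continuous_E0, Hv.
Qed.

Lemma beta_proj_weakly_continuous f : F0 f -> forall u, continuous (fun u => hinner F (beta_proj u) f) u.
Proof.
  intros Hf u. apply continuous_ext with (fun u => hinner F (beta u) f).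
  intro u'. symmetry. apply (beta_proj_spec u'), Hf. apply beta_weakly_continuous_F0, Hf.
Qed.

Definition span_alpha_proj := closed_span E (fun x => exists k, x = alpha_proj (d k)).
Definition span_beta_proj := closed_span F (fun x => exists k, x = beta_proj (d k)).

Lemma span_alpha_proj_E0 x : span_alpha_proj x -> E0 x.
Proof.
  apply closed_span_min. apply closed_span_subspace. apply closed_span_closed.
  intros v [k ->]. apply alpha_proj_spec.
Qed.

Lemma span_beta_proj_F0 x : span_beta_proj x -> F0 x.
Proof.
  apply closed_span_min. apply closed_span_subspace. apply closed_span_closed.
  intros v [k ->]. apply beta_proj_spec.
Qed.

Lemma alpha_proj_in_span s : span_alpha_proj (alpha_proj s).
Proof.
  apply (closed_span_of_dense E _ E0 alpha_proj d Hd).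
  - apply closed_span_subspace.
  - apply span_alpha_proj_E0.
  - apply alpha_proj_weakly_continuous.
  - intro k. exists k. auto.
  - intro; apply alpha_proj_spec.
Qed.

Lemma beta_proj_in_span u : span_beta_proj (beta_proj u).
Proof.
  apply (closed_span_of_dense F _ F0 beta_proj d Hd).
  - apply closed_span_subspace.
  - apply span_beta_proj_F0.
  - apply beta_proj_weakly_continuous.
  - intro k. exists k. auto.
  - intro; apply beta_proj_spec.
Qed.

(* Continuity in t is first propagated from the generators alpha_proj (d k) to all of
   span_alpha_proj (for f = beta_proj u), then from the beta_proj (d k) to span_beta_proj. *)
Lemma theta_matrix_continuous e f : span_alpha_proj e -> span_beta_proj f ->
  forall t, continuous (fun t => hinner E (theta t f) e) t.
Proof.
  intros He Hf.
  assert (S1 : forall u e, span_alpha_proj e ->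
                 forall t, continuous (fun t => hinner E (theta t (beta_proj u)) e) t).
  { intros u. destruct (weakly_continuous_closed_subspace E
      (fun t e => hinner E (theta t (beta_proj u)) e) 1) as [HS HC].
    - intros. apply hinner_addr.
    - intros a0 x. exists (Cconj a0). intro. apply hinner_scalr.
    - intros t x. apply Cmod_hinner_le. pose proof (Ht t (beta_proj u)).
      pose proof (beta_proj_spec u) as [_ [_ Q]]. lra.
    - apply (closed_span_min E (fun x => exists k, x = alpha_proj (d k)) _ HS HC). intros v [k ->] t.
      apply continuous_ext with (fun t => Cconj (phi (d k) t u)).
      + intro. rewrite <- phi_proj. symmetry. apply hinner_sym.
      + apply continuous_Cconj, Hsc. }
  destruct (weakly_continuous_closed_subspace F (fun t f => hinner E (theta t f) e) (hnorm E e))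
    as [HS HC].
  - intros. rewrite theta_plus. apply hinner_addl.
  - intros a0 x. exists a0. intro. rewrite theta_scal. apply hinner_scall.
  - intros t x. rewrite Cauchy_Schwarz. pose proof (Ht t x). pose proof (hnorm_ge0 E e).
    pose proof (hnorm_ge0 E (theta t x)). nra.
  - apply (closed_span_min F (fun x => exists k, x = beta_proj (d k)) _ HS HC); auto.
    intros v [k ->]. apply S1; auto.
Qed.

Definition basis_E := gram_schmidt E (fun k => alpha_proj (d k)).
Definition basis_F := gram_schmidt F (fun k => beta_proj (d k)).

Lemma basis_E_in_span m : span_alpha_proj (basis_E m).
Proof.
  apply (gram_schmidt_in E (fun k => alpha_proj (d k))). apply closed_span_subspace.
  intro k. apply closed_span_incl. exists k. auto.
Qed.

Lemma basis_F_in_span n : span_beta_proj (basis_F n).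
Proof.
  apply (gram_schmidt_in F (fun k => beta_proj (d k))). apply closed_span_subspace.
  intro k. apply closed_span_incl. exists k. auto.
Qed.

Lemma fourier_cvg_basis_E x : span_alpha_proj x -> fourier_cvg E basis_E x.
Proof.
  destruct (fourier_cvg_closed_subspace E basis_E (gram_schmidt_orthonormal E _)) as [HS HC].
  apply closed_span_min; auto. intros v [k ->]. apply fourier_cvg_of_in_span with (S k).
  apply gram_schmidt_orthonormal. apply gram_schmidt_spans.
Qed.

Lemma fourier_cvg_basis_F x : span_beta_proj x -> fourier_cvg F basis_F x.
Proof.
  destruct (fourier_cvg_closed_subspace F basis_F (gram_schmidt_orthonormal F _)) as [HS HC].
  apply closed_span_min; auto. intros v [k ->]. apply fourier_cvg_of_in_span with (S k).
  apply gram_schmidt_orthonormal. apply gram_schmidt_spans.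
Qed.

Lemma theta_beta_coef_series t u m :
  is_series (fun n => Cmult (hinner E (theta t (basis_F n)) (basis_E m)) (hinner F (beta_proj u) (basis_F n)))
    (hinner E (theta t (beta_proj u)) (basis_E m)).
Proof.
  apply is_series_C_eps. intros eps He.
  destruct (fourier_cvg_basis_F (beta_proj u) (beta_proj_in_span u) eps He) as [N HN].
  exists N. intros n Hn. rewrite sum_n_csum.
  set (bn := fourier F basis_F (S n) (beta_proj u)).
  assert (Ec : csum (fun n => Cmult (hinner E (theta t (basis_F n)) (basis_E m))
                                    (hinner F (beta_proj u) (basis_F n))) (S n)
               = hinner E (theta t bn) (basis_E m)).
  { unfold bn, fourier. rewrite (linear_hsum E F (theta t) (Hlin t)), hinner_hsum_l.
    apply csum_ext. intros j _. rewrite theta_scal, hinner_scall. apply Cmult_comm. }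
  rewrite Ec, <- hinner_minus_l, <- (linear_minus E F (theta t) (Hlin t)).
  eapply Rle_lt_trans. apply Cauchy_Schwarz.
  pose proof (hnorm_orthonormal_le1 E basis_E (gram_schmidt_orthonormal E _) m).
  pose proof (Ht t (minus bn (beta_proj u))).
  specialize (HN (S n) ltac:(lia)). fold bn in HN. rewrite hnorm_minus_sym in HN.
  pose proof (hnorm_ge0 E (basis_E m)). pose proof (hnorm_ge0 E (theta t (minus bn (beta_proj u)))).
  nra.
Qed.

Lemma phi_coef_series s t u :
  is_series (fun m => Cmult (hinner E (alpha_proj s) (basis_E m))
                            (Cconj (hinner E (theta t (beta_proj u)) (basis_E m))))
    (phi s t u).
Proof.
  apply is_series_C_eps. intros eps He.
  destruct (fourier_cvg_basis_E (alpha_proj s) (alpha_proj_in_span s) eps He) as [N HN].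
  exists N. intros n Hn. rewrite sum_n_csum, <- phi_proj.
  set (an := fourier E basis_E (S n) (alpha_proj s)).
  assert (Ec : csum (fun m => Cmult (hinner E (alpha_proj s) (basis_E m))
                     (Cconj (hinner E (theta t (beta_proj u)) (basis_E m)))) (S n)
               = hinner E an (theta t (beta_proj u))).
  { unfold an, fourier. rewrite hinner_hsum_l. apply csum_ext. intros j _.
    rewrite hinner_scall. f_equal. symmetry. apply hinner_sym. }
  rewrite Ec, <- hinner_minus_l.
  eapply Rle_lt_trans. apply Cauchy_Schwarz.
  pose proof (Ht t (beta_proj u)). pose proof (beta_proj_spec u) as [_ [_ Q]].
  specialize (HN (S n) ltac:(lia)). fold an in HN. rewrite hnorm_minus_sym in HN.
  pose proof (hnorm_ge0 E (theta t (beta_proj u))).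
  pose proof (hnorm_ge0 E (minus an (alpha_proj s))). nra.
Qed.

Lemma continuous_l2_factorization_of_dense : continuous_l2_factorization phi.
Proof.
  exists (fun m s => hinner E (alpha_proj s) (basis_E m)),
    (fun m n t => hinner E (theta t (basis_F n)) (basis_E m)),
    (fun n u => hinner F (beta_proj u) (basis_F n)).
  split; [|split; [|split; [|split; [|split; [|split]]]]].
  - intros m s. apply alpha_proj_weakly_continuous, span_alpha_proj_E0, basis_E_in_span.
  - intros m n t. apply theta_matrix_continuous. apply basis_E_in_span. apply basis_F_in_span.
  - intros n u. apply beta_proj_weakly_continuous, span_beta_proj_F0, basis_F_in_span.
  - intros s N. rewrite sum_n_rsum. eapply Rle_trans. apply Bessel. apply gram_schmidt_orthonormal.
    pose proof (alpha_proj_spec s) as [_ [_ Q]]. pose proof (hnorm_ge0 E (alpha_proj s)). simpl. nra.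
  - intros u N. rewrite sum_n_rsum. eapply Rle_trans. apply Bessel. apply gram_schmidt_orthonormal.
    pose proof (beta_proj_spec u) as [_ [_ Q]]. pose proof (hnorm_ge0 F (beta_proj u)). simpl. nra.
  - intro t. apply operator_matrix_l2_contraction; auto; apply gram_schmidt_orthonormal.
  - intros s t u. exists (fun m => hinner E (theta t (beta_proj u)) (basis_E m)).
    split. apply theta_beta_coef_series. apply phi_coef_series.
Qed.

End ContinuousFactorization.

Definition rat_seq (k : nat) : R :=
  let (p, q) := Cantor.of_nat k in
  let (i, j) := Cantor.of_nat p in
  (INR i - INR j) / INR (S q).

Lemma rat_seq_dense : dense_seq rat_seq.
Proof.
  intros x eps He.
  destruct (inv_INR_S_lt eps He) as [q Hq]. specialize (Hq q (le_n q)).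
  set (Q := INR (S q)).
  assert (HQ : 0 < Q) by (apply lt_0_INR; lia).
  destruct (archimed (x * Q)) as [A1 A2].
  set (z := (up (x * Q) - 1)%Z).
  assert (Hz1 : IZR z <= x * Q) by (unfold z; rewrite minus_IZR; simpl; lra).
  assert (Hz2 : x * Q < IZR z + 1) by (unfold z; rewrite minus_IZR; simpl; lra).
  set (i := Z.to_nat (Z.max z 0)). set (j := Z.to_nat (Z.max (- z) 0)).
  assert (Hij : INR i - INR j = IZR z).
  { unfold i, j. rewrite !INR_IZR_INZ, !Z2Nat.id by lia.
    rewrite <- minus_IZR. f_equal. lia. }
  exists (Cantor.to_nat (Cantor.to_nat (i, j), q)).
  unfold rat_seq. rewrite !Cantor.cancel_of_to. fold Q. rewrite Hij.
  assert (eps * Q > 1).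
  { apply Rmult_lt_reg_r with (/ Q). apply Rinv_0_lt_compat; auto.
    replace (eps * Q * / Q) with eps by (field; lra). fold Q in Hq. lra. }
  replace (IZR z / Q - x) with ((IZR z - x * Q) / Q) by (field; lra).
  unfold Rdiv. rewrite Rabs_mult, Rabs_inv, (Rabs_pos_eq Q) by lra.
  apply Rmult_lt_reg_r with Q; auto. rewrite Rmult_assoc, Rinv_l, Rmult_1_r by lra.
  apply Rabs_def1; lra.
Qed.

Theorem continuous_l2_factorization_of_sep_continuous (phi : R -> R -> R -> C) (E F : Hilbert)
  (alpha : R -> E) (theta : R -> F -> E) (beta : R -> F) :
  sep_continuous phi ->
  (forall t, Clinear F E (theta t)) ->
  (forall s, hnorm E (alpha s) <= 1) ->
  (forall t (x : F), hnorm E (theta t x) <= hnorm F x) ->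
  (forall u, hnorm F (beta u) <= 1) ->
  (forall s t u, phi s t u = hinner E (alpha s) (theta t (beta u))) ->
  continuous_l2_factorization phi.
Proof.
  intros. apply (continuous_l2_factorization_of_dense E F alpha theta beta phi rat_seq); auto.
  apply rat_seq_dense.
Qed.

(** * Separate continuity of second divided differences *)

Section RealContinuity.
Context {U : UniformSpace}.

Lemma continuous_Rplus (f g : U -> R) x : continuous f x -> continuous g x ->
  continuous (fun y => f y + g y) x.
Proof. intros. apply (continuous_plus (K:=R_AbsRing) (V:=R_NormedModule) f g); auto. Qed.

Lemma continuous_Ropp (f : U -> R) x : continuous f x -> continuous (fun y => - f y) x.
Proof. intros. apply (continuous_opp (K:=R_AbsRing) (V:=R_NormedModule) f); auto. Qed.

Lemma continuous_Rminus (f g : U -> R) x : continuous f x -> continuous g x ->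
  continuous (fun y => f y - g y) x.
Proof. intros. apply continuous_Rplus; auto. apply continuous_Ropp; auto. Qed.

Lemma continuous_Rmult (f g : U -> R) x : continuous f x -> continuous g x ->
  continuous (fun y => f y * g y) x.
Proof. intros. apply (continuous_mult (K:=R_AbsRing) f g); auto. Qed.

Lemma continuous_Rdiv (f g : U -> R) x : continuous f x -> continuous g x -> g x <> 0 ->
  continuous (fun y => f y / g y) x.
Proof.
  intros. apply continuous_Rmult; auto.
  apply (continuous_comp g Rinv); auto. apply continuity_pt_filterlim, continuity_pt_inv; auto.
  apply continuity_pt_id.
Qed.

Lemma continuous_rsum (f : nat -> U -> R) N x : (forall m, continuous (f m) x) ->
  continuous (fun y => rsum (fun m => f m y) N) x.
Proof.
  intro Hf. induction N; simpl. apply continuous_const.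
  apply continuous_Rplus; auto.
Qed.

End RealContinuity.

Lemma continuous_R_eps (f : R -> R) (x : R) :
  continuous f x <->
  (forall eps, 0 < eps -> exists del, 0 < del /\ forall y, Rabs (y - x) < del -> Rabs (f y - f x) < eps).
Proof.
  split.
  - intros Hc eps He.
    destruct (proj1 (filterlim_locally f (f x)) Hc (mkposreal _ He)) as [del Hd].
    exists del. split. apply cond_pos. intros y Hy. apply (Hd y Hy).
  - intros Hd. apply filterlim_locally. intro eps.
    destruct (Hd eps (cond_pos eps)) as [del [Hdel Hy]].
    exists (mkposreal _ Hdel). intros y By. apply Hy. exact By.
Qed.

Lemma continuous_ext_near (f g : R -> R) x : (exists del, 0 < del /\ forall y, Rabs (y - x) < del -> f y = g y) ->
  continuous f x -> continuous g x.
Proof.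
  intros [del [Hd Hy]] Hc. apply continuous_ext_loc with f; auto.
  exists (mkposreal _ Hd). intros y By. apply Hy. exact By.
Qed.

Definition dd1r (h : R -> R) (x0 x1 : R) : R :=
  if Req_EM_T x0 x1 then Derive h x0 else (h x0 - h x1) / (x0 - x1).
Definition dd2r (h : R -> R) (x0 x1 x2 : R) : R :=
  if Req_EM_T x0 x1 then Derive (fun x => dd1r h x x2) x1
  else (dd1r h x0 x2 - dd1r h x1 x2) / (x0 - x1).

Section DividedDifferences.
Variable h : R -> R.
Hypothesis Hh : C2R h.

Let h1 := Derive h.
Let h2 := Derive (Derive h).

Lemma continuous_h x : continuous h x.
Proof. apply (ex_derive_continuous (K:=R_AbsRing) (V:=R_NormedModule)). apply Hh. Qed.
Lemma continuous_Derive2_h x : continuous (Derive (Derive h)) x.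
Proof. apply Hh. Qed.

Lemma Taylor2_Lagrange x k : 0 < k -> exists z, x < z < x + k /\
  h (x + k) = h x + k * h1 x + k ^ 2 / 2 * h2 z.
Proof.
  intro Hk. destruct (Taylor_Lagrange h 1 x (x + k)) as [z [Hz E]]. lra.
  - intros t _ n Hn. destruct n as [|[|[|n]]]; simpl; auto; try lia.
    + apply Hh.
    + apply Hh.
  - exists z. split; auto. rewrite E. simpl. unfold h1, h2.
    replace (x + k - x) with k by ring.
    change (Derive (fun x : R => h x)) with (Derive h).
    change (fun x : R => Derive h x) with (Derive h). field.
Qed.

Lemma Taylor1_Lagrange_Derive x k : 0 < k -> exists z, x < z < x + k /\
  Derive h (x + k) = Derive h x + k * h2 z.
Proof.
  intro Hk. destruct (Taylor_Lagrange (Derive h) 0 x (x + k)) as [z [Hz E]]. lra.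
  - intros t _ n Hn. destruct n as [|[|n]]; simpl; auto; try lia. apply Hh.
  - exists z. split; auto. rewrite E. simpl. unfold h2.
    replace (x + k - x) with k by ring.
    change (fun x : R => Derive h x) with (Derive h). field.
Qed.

Lemma Taylor2_quotient_lim x : forall eps, 0 < eps -> exists del, 0 < del /\ forall k, k <> 0 -> Rabs k < del ->
  Rabs ((h (x + k) - h x - h1 x * k) / k ^ 2 - h2 x / 2) < eps.
Proof.
  intros eps He.
  destruct (proj1 (continuous_R_eps _ x) (continuous_Derive2_h x) (eps / 2)) as [del [Hdel Hc]]. lra.
  exists del. split; auto. intros k Hk0 Hk.
  destruct (Rlt_or_le 0 k) as [Kp|Kn].
  - destruct (Taylor2_Lagrange x k Kp) as [z [Hz E]]. rewrite E.
    replace ((h x + k * h1 x + k ^ 2 / 2 * h2 z - h x - h1 x * k) / k ^ 2 - h2 x / 2)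
      with ((h2 z - h2 x) / 2) by (field; auto).
    assert (Hzx : Rabs (z - x) < del)
      by (rewrite Rabs_right by lra; rewrite Rabs_right in Hk by lra; lra).
    specialize (Hc z Hzx). unfold h2 in *. apply Rabs_def2 in Hc. apply Rabs_def1; lra.
  - assert (Kn' : 0 < - k) by lra.
    destruct (Taylor2_Lagrange (x + k) (- k) Kn') as [z [Hz E]].
    replace (x + k + - k) with x in E by ring.
    destruct (Taylor1_Lagrange_Derive (x + k) (- k) Kn') as [z' [Hz' E']].
    replace (x + k + - k) with x in E' by ring.
    fold h1 in E'.
    replace ((h (x + k) - h x - h1 x * k) / k ^ 2 - h2 x / 2)
      with ((h2 z' - h2 x) - (h2 z - h2 x) / 2).
    2:{ rewrite E, E'. field. auto. }
    assert (Hzx : Rabs (z - x) < del)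
      by (rewrite Rabs_left1 by lra; rewrite Rabs_left1 in Hk by lra; lra).
    assert (Hzx' : Rabs (z' - x) < del)
      by (rewrite Rabs_left1 by lra; rewrite Rabs_left1 in Hk by lra; lra).
    pose proof (Hc z Hzx) as C1. pose proof (Hc z' Hzx') as C2. unfold h2 in *.
    apply Rabs_def2 in C1. apply Rabs_def2 in C2. apply Rabs_def1; lra.
Qed.

Definition dd1r_deriv_off (y z : R) : R := (h1 y * (y - z) - (h y - h z)) / (y - z) ^ 2.
Definition dd1r_deriv (y z : R) : R := if Req_EM_T y z then h2 z / 2 else dd1r_deriv_off y z.

Lemma is_derive_dd1r_off z y : y <> z -> is_derive (fun w => dd1r h w z) y (dd1r_deriv_off y z).
Proof.
  intro Hyz.
  apply is_derive_ext_loc with (fun w => (h w - h z) / (w - z)).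
  - assert (Hd : 0 < Rabs (y - z)) by (apply Rabs_pos_lt; lra).
    exists (mkposreal _ Hd). intros w Bw. change (Rabs (w - y) < Rabs (y - z)) in Bw.
    unfold dd1r. destruct (Req_EM_T w z). subst. rewrite Rabs_minus_sym in Bw. lra. auto.
  - unfold dd1r_deriv_off. auto_derive. repeat split; auto. apply Hh. lra.
    unfold h1. change (Derive (fun x : R => h x) y) with (Derive h y). field. lra.
Qed.

Lemma is_derive_dd1r_diag z : is_derive (fun w => dd1r h w z) z (h2 z / 2).
Proof.
  apply is_derive_Reals. intros eps He.
  destruct (Taylor2_quotient_lim z eps He) as [del [Hdel HQ]].
  exists (mkposreal _ Hdel). intros k Hk0 Hk. simpl in Hk.
  unfold dd1r. destruct (Req_EM_T (z + k) z). lra. destruct (Req_EM_T z z); [|congruence].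
  replace (z + k - z) with k by ring.
  replace ((((h (z + k) - h z) / k) - Derive h z) / k) with
    ((h (z + k) - h z - h1 z * k) / k ^ 2) by (unfold h1; field; auto).
  apply HQ; auto.
Qed.

Lemma is_derive_dd1r z y : is_derive (fun w => dd1r h w z) y (dd1r_deriv y z).
Proof.
  unfold dd1r_deriv. destruct (Req_EM_T y z). subst. apply is_derive_dd1r_diag. apply is_derive_dd1r_off; auto.
Qed.

Lemma continuous_dd1r z y : continuous (fun w => dd1r h w z) y.
Proof.
  apply (ex_derive_continuous (K:=R_AbsRing) (V:=R_NormedModule)). eexists. apply is_derive_dd1r.
Qed.

Lemma dd1r_sym w z : dd1r h w z = dd1r h z w.
Proof.
  unfold dd1r. destruct (Req_EM_T w z); destruct (Req_EM_T z w); subst; try congruence.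
  field. lra.
Qed.

Lemma dd2r_diag x z : dd2r h x x z = dd1r_deriv x z.
Proof.
  unfold dd2r. destruct (Req_EM_T x x); [|congruence]. apply is_derive_unique. apply is_derive_dd1r.
Qed.

Lemma dd2r_off x y z : x <> y -> dd2r h x y z = (dd1r h x z - dd1r h y z) / (x - y).
Proof. intro. unfold dd2r. destruct (Req_EM_T x y); [congruence| auto]. Qed.

Lemma dd1r_difference_quotient_lim z y : forall eps, 0 < eps -> exists del, 0 < del /\ forall x, x <> y -> Rabs (x - y) < del ->
  Rabs ((dd1r h x z - dd1r h y z) / (x - y) - dd1r_deriv y z) < eps.
Proof.
  intros eps He. pose proof (proj1 (is_derive_Reals _ _ _) (is_derive_dd1r z y) eps He) as [del Hd].
  exists del. split. apply cond_pos. intros x Hx Hxd.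
  specialize (Hd (x - y) ltac:(lra) Hxd). replace (y + (x - y)) with x in Hd by ring. auto.
Qed.

Lemma continuous_dd2r_1 y z x0 : continuous (fun x => dd2r h x y z) x0.
Proof.
  destruct (Req_EM_T x0 y) as [E|NE].
  - subst. apply continuous_R_eps. intros eps He. destruct (dd1r_difference_quotient_lim z y eps He) as [del [Hd Hq]].
    exists del. split; auto. intros x Hx. rewrite dd2r_diag.
    destruct (Req_EM_T x y). subst. rewrite dd2r_diag. rewrite Rminus_diag, Rabs_R0. auto.
    rewrite dd2r_off by auto. apply Hq; auto.
  - apply continuous_ext_near with (fun x => (dd1r h x z - dd1r h y z) / (x - y)).
    + exists (Rabs (x0 - y)). split. apply Rabs_pos_lt; lra. intros x Hx.
      rewrite dd2r_off; auto. intro; subst. rewrite Rabs_minus_sym in Hx. lra.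
    + apply continuous_Rdiv. apply continuous_Rminus. apply continuous_dd1r. apply continuous_const. apply continuous_Rminus. apply continuous_id. apply continuous_const.
      lra.
Qed.

Lemma continuous_dd2r_2 x z y0 : continuous (fun y => dd2r h x y z) y0.
Proof.
  destruct (Req_EM_T y0 x) as [E|NE].
  - subst. apply continuous_R_eps. intros eps He. destruct (dd1r_difference_quotient_lim z x eps He) as [del [Hd Hq]].
    exists del. split; auto. intros y Hy. rewrite dd2r_diag.
    destruct (Req_EM_T y x). subst. rewrite dd2r_diag. rewrite Rminus_diag, Rabs_R0. auto.
    rewrite dd2r_off by auto.
    replace ((dd1r h x z - dd1r h y z) / (x - y)) with ((dd1r h y z - dd1r h x z) / (y - x)) by (field; lra).
    apply Hq; auto.
  - apply continuous_ext_near with (fun y => (dd1r h y z - dd1r h x z) / (y - x)).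
    + exists (Rabs (y0 - x)). split. apply Rabs_pos_lt; lra. intros y Hy.
      assert (x <> y) by (intro; subst; rewrite Rabs_minus_sym in Hy; lra).
      rewrite dd2r_off; auto. field. lra.
    + apply continuous_Rdiv. apply continuous_Rminus. apply continuous_dd1r. apply continuous_const. apply continuous_Rminus. apply continuous_id. apply continuous_const.
      lra.
Qed.

Lemma continuous_dd1r_deriv_off x z0 : z0 <> x -> continuous (fun z => dd1r_deriv_off x z) z0.
Proof.
  intro Hz. unfold dd1r_deriv_off. apply continuous_Rdiv.
  - apply continuous_Rminus. apply continuous_Rmult. apply continuous_const. apply continuous_Rminus. apply continuous_const. apply continuous_id.
    apply continuous_Rminus. apply continuous_const. apply continuous_h.
  - apply (continuous_ext (fun z => (x - z) * ((x - z) * 1))). intro; simpl; auto.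
    apply continuous_Rmult. apply continuous_Rminus. apply continuous_const. apply continuous_id.
    apply continuous_Rmult. apply continuous_Rminus. apply continuous_const. apply continuous_id. apply continuous_const.
  - apply pow_nonzero. lra.
Qed.

Lemma continuous_dd1r_deriv x z0 : continuous (fun z => dd1r_deriv x z) z0.
Proof.
  destruct (Req_EM_T z0 x) as [E|NE].
  - subst. apply continuous_R_eps. intros eps He. destruct (Taylor2_quotient_lim x eps He) as [del [Hd HQ]].
    exists del. split; auto. intros z Hz. unfold dd1r_deriv at 2. destruct (Req_EM_T x x); [|congruence].
    unfold dd1r_deriv. destruct (Req_EM_T x z). subst. rewrite Rminus_diag, Rabs_R0. auto.
    unfold dd1r_deriv_off. replace ((h1 x * (x - z) - (h x - h z)) / (x - z) ^ 2) with
      ((h (x + (z - x)) - h x - h1 x * (z - x)) / (z - x) ^ 2).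
    apply HQ; auto. lra. replace (x + (z - x)) with z by ring. field. lra.
  - apply continuous_ext_near with (fun z => dd1r_deriv_off x z).
    + exists (Rabs (z0 - x)). split. apply Rabs_pos_lt; lra. intros z Hzz. unfold dd1r_deriv.
      destruct (Req_EM_T x z); auto. subst. rewrite Rabs_minus_sym in Hzz. lra.
    + apply continuous_dd1r_deriv_off; auto.
Qed.

Lemma continuous_dd2r_3 x y z0 : continuous (fun z => dd2r h x y z) z0.
Proof.
  destruct (Req_EM_T x y) as [E|NE].
  - subst. apply continuous_ext with (fun z => dd1r_deriv y z). intro. symmetry. apply dd2r_diag. apply continuous_dd1r_deriv.
  - apply continuous_ext with (fun z => (dd1r h z x - dd1r h z y) / (x - y)).
    intro z. rewrite dd2r_off by auto. rewrite (dd1r_sym x z), (dd1r_sym y z). auto.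
    apply continuous_Rdiv. apply continuous_Rminus; apply continuous_dd1r. apply continuous_const. lra.
Qed.

End DividedDifferences.


Lemma Cdiv_RtoC (c : C) (r : R) : r <> 0 -> Cdiv c (RtoC r) = (Re c / r, Im c / r).
Proof. intro. destruct c as [p q]. unfold Cdiv, Cinv, Cmult. simpl. apply injective_projections; simpl; field; auto. Qed.

Lemma dd1_Re_Im f x0 x1 : dd1 f x0 x1 = (dd1r (fun y => Re (f y)) x0 x1, dd1r (fun y => Im (f y)) x0 x1).
Proof.
  unfold dd1, dd1r. destruct (Req_EM_T x0 x1). reflexivity.
  rewrite Cdiv_RtoC by lra. destruct (f x0), (f x1). reflexivity.
Qed.

Lemma dd2_Re_Im f x0 x1 x2 : dd2 f x0 x1 x2 =
  (dd2r (fun y => Re (f y)) x0 x1 x2, dd2r (fun y => Im (f y)) x0 x1 x2).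
Proof.
  unfold dd2, dd2r. destruct (Req_EM_T x0 x1).
  - unfold Cderive. f_equal; apply Derive_ext; intro; rewrite dd1_Re_Im; reflexivity.
  - rewrite Cdiv_RtoC by lra. rewrite !dd1_Re_Im. reflexivity.
Qed.

Lemma continuous_C_Re_Im (g : R -> C) x : continuous (fun y => Re (g y)) x -> continuous (fun y => Im (g y)) x ->
  continuous g x.
Proof.
  intros Hr Hi. apply continuous_C_eps. intros eps He.
  destruct (proj1 (continuous_R_eps _ x) Hr (eps/2)) as [d1 [Hd1 H1]]. lra.
  destruct (proj1 (continuous_R_eps _ x) Hi (eps/2)) as [d2 [Hd2 H2]]. lra.
  exists (Rmin d1 d2). split. apply Rmin_pos; auto. intros y Hy.
  pose proof (Rmin_l d1 d2). pose proof (Rmin_r d1 d2).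
  specialize (H1 y ltac:(lra)). specialize (H2 y ltac:(lra)).
  eapply Rle_lt_trans. apply Cmod_le_Re_Im.
  replace (Re (Cminus (g y) (g x))) with (Re (g y) - Re (g x)) by (destruct (g y), (g x); simpl; ring).
  replace (Im (Cminus (g y) (g x))) with (Im (g y) - Im (g x)) by (destruct (g y), (g x); simpl; ring).
  lra.
Qed.

Lemma sep_continuous_dd2 f : C2C f -> sep_continuous (dd2 f).
Proof.
  intros [Hr Hi]. split; [|split].
  - intros t u s. apply continuous_C_Re_Im.
    + apply continuous_ext with (fun y => dd2r (fun y => Re (f y)) y t u). intro; rewrite dd2_Re_Im; auto.
      apply continuous_dd2r_1; auto.
    + apply continuous_ext with (fun y => dd2r (fun y => Im (f y)) y t u). intro; rewrite dd2_Re_Im; auto.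
      apply continuous_dd2r_1; auto.
  - intros s u t. apply continuous_C_Re_Im.
    + apply continuous_ext with (fun y => dd2r (fun y => Re (f y)) s y u). intro; rewrite dd2_Re_Im; auto.
      apply continuous_dd2r_2; auto.
    + apply continuous_ext with (fun y => dd2r (fun y => Im (f y)) s y u). intro; rewrite dd2_Re_Im; auto.
      apply continuous_dd2r_2; auto.
  - intros s t u. apply continuous_C_Re_Im.
    + apply continuous_ext with (fun y => dd2r (fun y => Re (f y)) s t y). intro; rewrite dd2_Re_Im; auto.
      apply continuous_dd2r_3; auto.
    + apply continuous_ext with (fun y => dd2r (fun y => Im (f y)) s t y). intro; rewrite dd2_Re_Im; auto.
      apply continuous_dd2r_3; auto.
Qed.



(** * The Hilbert space l^2 *)

Definition is_l2 (x : nat -> C) : Prop := ex_series (fun n => Cmod (x n) ^ 2).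
Definition l2 := {x : nat -> C | is_l2 x}.
Definition l2_val (x : l2) : nat -> C := proj1_sig x.

Lemma l2_eq (x y : l2) : (forall n, l2_val x n = l2_val y n) -> x = y.
Proof.
  destruct x as [x Hx], y as [y Hy]. simpl. intro E.
  assert (x = y) by (apply functional_extensionality; auto). subst.
  f_equal. apply proof_irrelevance.
Qed.

Lemma ex_series_R_le (a b : nat -> R) : (forall n, 0 <= a n <= b n) -> ex_series b -> ex_series a.
Proof.
  intros Hab Hb. apply (ex_series_le (K:=R_AbsRing) (V:=R_CompleteNormedModule) a b); auto.
  intro n. change (norm (a n)) with (Rabs (a n)). rewrite Rabs_right by (destruct (Hab n); lra). apply Hab.
Qed.

Lemma ex_series_Rplus (a b : nat -> R) : ex_series a -> ex_series b -> ex_series (fun n => a n + b n).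
Proof. intros. apply (ex_series_plus (K:=R_AbsRing) (V:=R_NormedModule) a b); auto. Qed.

Lemma ex_series_Rscal (c : R) (a : nat -> R) : ex_series a -> ex_series (fun n => c * a n).
Proof. intros. apply (ex_series_scal (K:=R_AbsRing) (V:=R_NormedModule) c a); auto. Qed.

Lemma ex_series_R0 : ex_series (fun _ : nat => 0).
Proof.
  assert (Hb : forall N, rsum (fun _ => 0) N <= 0) by (intro N; induction N; simpl; lra).
  destruct (series_of_bounded_partial_sums (fun _ => 0) 0 (fun _ => Rle_refl 0) Hb) as [A _]. exact A.
Qed.

Lemma is_l2_plus x y : is_l2 x -> is_l2 y -> is_l2 (fun n => Cplus (x n) (y n)).
Proof.
  intros Hx Hy. apply ex_series_R_le with (fun n => 2 * Cmod (x n) ^ 2 + 2 * Cmod (y n) ^ 2).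
  intro n. split. apply pow2_ge_0. apply Cmod_plus_sq.
  apply ex_series_Rplus; apply ex_series_Rscal; auto.
Qed.

Lemma is_l2_scal c x : is_l2 x -> is_l2 (fun n => Cmult c (x n)).
Proof.
  intro Hx. apply ex_series_ext with (fun n => Cmod c ^ 2 * Cmod (x n) ^ 2).
  intro n. rewrite Cmod_mult, Rpow_mult_distr. reflexivity. apply ex_series_Rscal; auto.
Qed.

Lemma is_l2_zero : is_l2 (fun _ => RtoC 0).
Proof. apply ex_series_ext with (fun _ => 0). intro. rewrite Cmod_0. simpl. symmetry. apply Rmult_0_l. apply ex_series_R0. Qed.

Definition l2_plus (x y : l2) : l2 :=
  exist _ (fun n => Cplus (l2_val x n) (l2_val y n)) (is_l2_plus _ _ (proj2_sig x) (proj2_sig y)).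
Definition l2_zero : l2 := exist _ (fun _ => RtoC 0) is_l2_zero.
Definition l2_scal (c : C) (x : l2) : l2 :=
  exist _ (fun n => Cmult c (l2_val x n)) (is_l2_scal c _ (proj2_sig x)).
Definition l2_opp (x : l2) : l2 := l2_scal (Copp (RtoC 1)) x.

Lemma l2_plus_comm x y : l2_plus x y = l2_plus y x.
Proof. apply l2_eq. intro. simpl. ring. Qed.
Lemma l2_plus_assoc x y z : l2_plus x (l2_plus y z) = l2_plus (l2_plus x y) z.
Proof. apply l2_eq. intro. simpl. ring. Qed.
Lemma l2_plus_zero_r x : l2_plus x l2_zero = x.
Proof. apply l2_eq. intro. simpl. ring. Qed.

Definition l2_AbelianMonoid_mixin := AbelianMonoid.Mixin l2 l2_plus l2_zero l2_plus_comm l2_plus_assoc l2_plus_zero_r.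
Canonical l2_AbelianMonoid := AbelianMonoid.Pack l2 l2_AbelianMonoid_mixin l2.

Lemma l2_plus_opp_r (x : l2) : plus x (l2_opp x) = zero.
Proof. apply l2_eq. intro. simpl. ring. Qed.

Definition l2_AbelianGroup_mixin := AbelianGroup.Mixin l2_AbelianMonoid l2_opp l2_plus_opp_r.
Canonical l2_AbelianGroup := AbelianGroup.Pack l2 (AbelianGroup.Class _ l2_AbelianMonoid_mixin l2_AbelianGroup_mixin) l2.

Lemma l2_scal_assoc (x y : C) (u : l2) : l2_scal x (l2_scal y u) = l2_scal (mult x y) u.
Proof. apply l2_eq. intro. simpl. change (mult x y) with (Cmult x y). ring. Qed.
Lemma l2_scal_one (u : l2) : l2_scal one u = u.
Proof. apply l2_eq. intro. simpl. change (@one C_Ring) with (RtoC 1). ring. Qed.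
Lemma l2_scal_distr_l (x : C) (u v : l2) : l2_scal x (plus u v) = plus (l2_scal x u) (l2_scal x v).
Proof. apply l2_eq. intro. simpl. ring. Qed.
Lemma l2_scal_distr_r (x y : C) (u : l2) : l2_scal (plus x y) u = plus (l2_scal x u) (l2_scal y u).
Proof. apply l2_eq. intro. simpl. change (plus x y) with (Cplus x y). ring. Qed.

Definition l2_ModuleSpace_mixin := ModuleSpace.Mixin C_Ring l2_AbelianGroup l2_scal l2_scal_assoc l2_scal_one l2_scal_distr_l l2_scal_distr_r.
Canonical l2_ModuleSpace := ModuleSpace.Pack C_Ring l2
  (ModuleSpace.Class C_Ring l2 (AbelianGroup.Class _ l2_AbelianMonoid_mixin l2_AbelianGroup_mixin) l2_ModuleSpace_mixin) l2.

Lemma l2_val_minus (x y : l2_ModuleSpace) n : l2_val (minus x y) n = Cminus (l2_val x n) (l2_val y n).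
Proof. simpl. ring. Qed.
Lemma l2_val_zero n : l2_val (zero : l2_ModuleSpace) n = RtoC 0.
Proof. reflexivity. Qed.


Definition l2_prod (x y : l2) (n : nat) : C := Cmult (l2_val x n) (Cconj (l2_val y n)).

Lemma Cmod_mult_conj_le (a b : C) : Cmod (Cmult a (Cconj b)) <= (Cmod a ^ 2 + Cmod b ^ 2) / 2.
Proof.
  rewrite Cmod_mult, Cmod_conj. pose proof (pow2_ge_0 (Cmod a - Cmod b)). nra.
Qed.

Lemma l2_prod_bound x y : ex_series (fun n => (Cmod (l2_val x n) ^ 2 + Cmod (l2_val y n) ^ 2) / 2).
Proof.
  apply ex_series_ext with (fun n => / 2 * (Cmod (l2_val x n) ^ 2 + Cmod (l2_val y n) ^ 2)).
  intro; unfold Rdiv; simpl; apply Rmult_comm.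
  apply ex_series_Rscal. apply ex_series_Rplus. apply (proj2_sig x). apply (proj2_sig y).
Qed.

Lemma ex_series_Rabs_le (a : nat -> R) (b : nat -> R) : (forall n, Rabs (a n) <= b n) -> ex_series b -> ex_series a.
Proof.
  intros Hab Hb. apply (ex_series_le (K:=R_AbsRing) (V:=R_CompleteNormedModule) a b); auto.
Qed.

Lemma ex_series_l2_prod_Re x y : ex_series (fun n => Re (l2_prod x y n)).
Proof.
  apply ex_series_Rabs_le with (fun n => (Cmod (l2_val x n) ^ 2 + Cmod (l2_val y n) ^ 2) / 2).
  intro n. eapply Rle_trans. apply re_le_Cmod. apply Cmod_mult_conj_le. apply l2_prod_bound.
Qed.
Lemma ex_series_l2_prod_Im x y : ex_series (fun n => Im (l2_prod x y n)).
Proof.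
  apply ex_series_Rabs_le with (fun n => (Cmod (l2_val x n) ^ 2 + Cmod (l2_val y n) ^ 2) / 2).
  intro n. eapply Rle_trans. apply Im_le_Cmod. apply Cmod_mult_conj_le. apply l2_prod_bound.
Qed.

Definition l2_inner (x y : l2_ModuleSpace) : C :=
  (Series (fun n => Re (l2_prod x y n)), Series (fun n => Im (l2_prod x y n))).

Lemma l2_inner_addl (x y z : l2_ModuleSpace) : l2_inner (plus x y) z = Cplus (l2_inner x z) (l2_inner y z).
Proof.
  unfold l2_inner. apply injective_projections; simpl.
  - rewrite <- Series_plus by (apply ex_series_l2_prod_Re). apply Series_ext. intro n. unfold l2_prod. simpl. ring.
  - rewrite <- Series_plus by (apply ex_series_l2_prod_Im). apply Series_ext. intro n. unfold l2_prod. simpl. ring.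
Qed.

Lemma l2_inner_scall (a : C) (x y : l2_ModuleSpace) : l2_inner (scal a x) y = Cmult a (l2_inner x y).
Proof.
  unfold l2_inner. destruct a as [ar ai]. apply injective_projections; simpl.
  - rewrite <- !Series_scal_l, <- Series_minus.
    apply Series_ext. intro n. unfold l2_prod. simpl. ring.
    apply ex_series_Rscal, ex_series_l2_prod_Re. apply ex_series_Rscal, ex_series_l2_prod_Im.
  - rewrite <- !Series_scal_l, <- Series_plus.
    apply Series_ext. intro n. unfold l2_prod. simpl. ring.
    apply ex_series_Rscal, ex_series_l2_prod_Im. apply ex_series_Rscal, ex_series_l2_prod_Re.
Qed.

Lemma l2_inner_sym (x y : l2_ModuleSpace) : l2_inner y x = Cconj (l2_inner x y).
Proof.
  unfold l2_inner, Cconj. apply injective_projections; simpl.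
  - apply Series_ext. intro n. unfold l2_prod. simpl. ring.
  - rewrite <- Series_opp. apply Series_ext. intro n. unfold l2_prod. simpl. ring.
Qed.

Lemma l2_prod_self_Re x n : Re (l2_prod x x n) = Cmod (l2_val x n) ^ 2.
Proof. unfold l2_prod. rewrite Cmod2_alt. destruct (l2_val x n). simpl. ring. Qed.

Lemma l2_inner_self_Re (x : l2_ModuleSpace) : Re (l2_inner x x) = Series (fun n => Cmod (l2_val x n) ^ 2).
Proof. unfold l2_inner. simpl. apply Series_ext. intro. apply l2_prod_self_Re. Qed.

Lemma Series_nonneg (a : nat -> R) : (forall n, 0 <= a n) -> ex_series a -> 0 <= Series a.
Proof.
  intros Hp Hs. exact (rsum_le_Series a 0 Hp Hs).
Qed.

Lemma l2_inner_pos (x : l2_ModuleSpace) : 0 <= Re (l2_inner x x).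
Proof. rewrite l2_inner_self_Re. apply Series_nonneg. intro; apply pow2_ge_0. apply (proj2_sig x). Qed.

Lemma l2_inner_def (x : l2_ModuleSpace) : l2_inner x x = RtoC 0 -> x = zero.
Proof.
  intro E. assert (S0 : Series (fun n => Cmod (l2_val x n) ^ 2) = 0).
  { rewrite <- l2_inner_self_Re, E. reflexivity. }
  apply l2_eq. intro n. rewrite l2_val_zero.
  pose proof (rsum_le_Series (fun n => Cmod (l2_val x n) ^ 2) (S n) (fun _ => pow2_ge_0 _) (proj2_sig x))
    as Hn.
  rewrite S0 in Hn. cbn [rsum] in Hn.
  pose proof (rsum_nonneg (fun n => Cmod (l2_val x n) ^ 2) n (fun _ => pow2_ge_0 _)).
  apply Cmod_eq_0. pose proof (Cmod_ge_0 (l2_val x n)).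
  assert (Cmod (l2_val x n) ^ 2 <= 0) by lra. nra.
Qed.

Lemma sqrt_l2_inner_sq (x : l2_ModuleSpace) : sqrt (Re (l2_inner x x)) ^ 2 = Series (fun n => Cmod (l2_val x n) ^ 2).
Proof. rewrite pow2_sqrt by apply l2_inner_pos. apply l2_inner_self_Re. Qed.

Lemma Cmod_minus_sq_le (a b c : C) :
  Cmod (Cminus a c) ^ 2 <= 2 * Cmod (Cminus a b) ^ 2 + 2 * Cmod (Cminus b c) ^ 2.
Proof. replace (Cminus a c) with (Cplus (Cminus a b) (Cminus b c)) by ring. apply Cmod_plus_sq. Qed.

Lemma Cmod_minus_sq_cvg (a : nat -> C) (b c : C) :
  (forall eps, 0 < eps -> exists K, forall k, (K <= k)%nat -> Cmod (Cminus (a k) b) < eps) ->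
  forall eps, 0 < eps -> exists K, forall k, (K <= k)%nat ->
    Rabs (Cmod (Cminus (a k) c) ^ 2 - Cmod (Cminus b c) ^ 2) < eps.
Proof.
  intros Ha eps He.
  set (B := Cmod (Cminus b c)).
  assert (HB : 0 <= B) by apply Cmod_ge_0.
  set (del := Rmin 1 (eps / (2 * B + 1))).
  assert (Hdel : 0 < del) by (apply Rmin_pos; [lra| apply Rdiv_lt_0_compat; lra]).
  destruct (Ha del Hdel) as [K HK]. exists K. intros k Hk. specialize (HK k Hk).
  set (A := Cmod (Cminus (a k) c)).
  assert (HA : Rabs (A - B) <= Cmod (Cminus (a k) b)).
  { unfold A, B. apply Rabs_le. split.
    - pose proof (Cmod_minus_triangle b (a k) c) as T. rewrite (Cmod_minus_sym b (a k)) in T. lra.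
    - pose proof (Cmod_minus_triangle (a k) b c). lra. }
  replace (A ^ 2 - B ^ 2) with ((A - B) * (A + B)) by ring.
  rewrite Rabs_mult.
  assert (HA0 : 0 <= A) by apply Cmod_ge_0.
  pose proof (Rmin_l 1 (eps / (2 * B + 1))) as Hm1. fold del in Hm1.
  pose proof (Rmin_r 1 (eps / (2 * B + 1))) as Hm2. fold del in Hm2.
  assert (Rabs (A + B) <= 2 * B + 1).
  { rewrite Rabs_right by lra. pose proof (Rle_abs (A - B)). lra. }
  apply Rle_lt_trans with (Cmod (Cminus (a k) b) * (2 * B + 1)).
  apply Rmult_le_compat; try apply Rabs_pos; lra.
  apply Rlt_le_trans with (del * (2 * B + 1)).
  apply Rmult_lt_compat_r; lra.
  apply Rle_trans with (eps / (2 * B + 1) * (2 * B + 1)).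
  apply Rmult_le_compat_r; lra.
  replace (eps / (2 * B + 1) * (2 * B + 1)) with eps by (field; lra). lra.
Qed.

Lemma rsum_cvg (x : nat -> nat -> R) (y : nat -> R) N :
  (forall m, (m < N)%nat -> forall eps, 0 < eps -> exists K, forall k, (K <= k)%nat -> Rabs (x k m - y m) < eps) ->
  forall eps, 0 < eps -> exists K, forall k, (K <= k)%nat -> Rabs (rsum (x k) N - rsum y N) < eps.
Proof.
  induction N; intros Hc eps He.
  - exists O. intros. simpl. rewrite Rminus_diag, Rabs_R0. auto.
  - destruct (IHN (fun m Hm => Hc m ltac:(lia)) (eps/2)) as [K1 H1]. lra.
    destruct (Hc N ltac:(lia) (eps/2)) as [K2 H2]. lra.
    exists (Nat.max K1 K2). intros k Hk. simpl.
    specialize (H1 k ltac:(lia)). specialize (H2 k ltac:(lia)).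
    replace (rsum (x k) N + x k N - (rsum y N + y N)) with ((rsum (x k) N - rsum y N) + (x k N - y N)) by ring.
    eapply Rle_lt_trans. apply Rabs_triang. lra.
Qed.

Section L2Completeness.
Variable u : nat -> l2_ModuleSpace.
Hypothesis Hc : forall eps, 0 < eps -> exists N, forall m n, (N <= m)%nat -> (N <= n)%nat ->
  Series (fun j => Cmod (Cminus (l2_val (u m) j) (l2_val (u n) j)) ^ 2) < eps ^ 2.

Lemma ex_series_l2_dist m n : ex_series (fun j => Cmod (Cminus (l2_val (u m) j) (l2_val (u n) j)) ^ 2).
Proof.
  apply ex_series_ext with (fun j => Cmod (l2_val (minus (u m) (u n)) j) ^ 2).
  intro. rewrite l2_val_minus. auto. apply (proj2_sig (minus (u m) (u n))).
Qed.

Lemma l2_Cauchy_coord_Cauchy j (f : C -> R) : (forall c, Rabs (f c) <= Cmod c) ->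
  (forall a b, f (Cminus a b) = f a - f b) -> Cauchy_crit (fun m => f (l2_val (u m) j)).
Proof.
  intros Hf Hfm eps He. destruct (Hc eps He) as [N HN]. exists N. intros m n Hm Hn.
  unfold R_dist. specialize (HN m n Hm Hn). rewrite <- Hfm.
  set (c := Cminus (l2_val (u m) j) (l2_val (u n) j)).
  assert (Hcj : Cmod c ^ 2 <= Series (fun j => Cmod (Cminus (l2_val (u m) j) (l2_val (u n) j)) ^ 2)).
  { eapply Rle_trans. 2: apply rsum_le_Series with (N := S j).
    cbn [rsum]. pose proof (rsum_nonneg (fun j => Cmod (Cminus (l2_val (u m) j) (l2_val (u n) j)) ^ 2)
      j (fun _ => pow2_ge_0 _)). unfold c. lra.
    intro; apply pow2_ge_0. apply ex_series_l2_dist. }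
  pose proof (Hf c). pose proof (Cmod_ge_0 c).
  assert (Cmod c < eps) by (apply Rnot_le_lt; intro; nra). lra.
Qed.

Lemma l2_Cauchy_coord_lim : exists l : nat -> C, forall j eps, 0 < eps ->
  exists m0, forall m, (m0 <= m)%nat -> Cmod (Cminus (l2_val (u m) j) (l j)) < eps.
Proof.
  assert (CauRe : forall j, Cauchy_crit (fun m => Re (l2_val (u m) j))).
  { intro j. apply l2_Cauchy_coord_Cauchy.
    - intro c. apply re_le_Cmod.
    - intros a b. destruct a, b. reflexivity. }
  assert (CauIm : forall j, Cauchy_crit (fun m => Im (l2_val (u m) j))).
  { intro j. apply l2_Cauchy_coord_Cauchy.
    - apply Im_le_Cmod.
    - intros a b. destruct a, b. reflexivity. }
  exists (fun j => (proj1_sig (Rcomplete.R_complete _ (CauRe j)),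
                    proj1_sig (Rcomplete.R_complete _ (CauIm j)))).
  intros j eps He.
  destruct (Rcomplete.R_complete _ (CauRe j)) as [lr Cr].
  destruct (Rcomplete.R_complete _ (CauIm j)) as [li Ci]. simpl.
  destruct (Cr (eps/2)) as [N1 H1]. lra. destruct (Ci (eps/2)) as [N2 H2]. lra.
  exists (Nat.max N1 N2). intros m Hm.
  specialize (H1 m ltac:(lia)). specialize (H2 m ltac:(lia)). unfold R_dist in *.
  eapply Rle_lt_trans. apply Cmod_le_Re_Im.
  destruct (l2_val (u m) j). simpl in *. rewrite <- !Rminus_def. lra.
Qed.

Lemma l2_Cauchy_tail_bound (l : nat -> C) :
  (forall j eps, 0 < eps -> exists m0, forall m, (m0 <= m)%nat -> Cmod (Cminus (l2_val (u m) j) (l j)) < eps) ->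
  forall eps, 0 < eps -> exists N, forall k M, (N <= k)%nat ->
    rsum (fun j => Cmod (Cminus (l2_val (u k) j) (l j)) ^ 2) M <= 2 * eps ^ 2.
Proof.
  intros Hconv eps He. destruct (Hc eps He) as [N HN]. exists N. intros k M Hk.
  apply Rnot_lt_le. intro Hlt.
  set (del := (rsum (fun j => Cmod (Cminus (l2_val (u k) j) (l j)) ^ 2) M - 2 * eps ^ 2) / 2).
  destruct (rsum_cvg (fun m j => Cmod (Cminus (l2_val (u m) j) (l j)) ^ 2) (fun _ => 0) M) with del
    as [m0 Hm0].
  { intros j _ e He'.
    destruct (Cmod_minus_sq_cvg (fun m => l2_val (u m) j) (l j) (l j) (Hconv j) e He') as [K HK].
    exists K. intros m Hm. specialize (HK m Hm).
    replace (Cminus (l j) (l j)) with (RtoC 0) in HK by ring.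
    rewrite Cmod_0 in HK. replace (0 ^ 2) with 0 in HK by ring. exact HK. }
  { unfold del; lra. }
  set (m := Nat.max N m0).
  specialize (Hm0 m ltac:(unfold m; lia)). specialize (HN k m Hk ltac:(unfold m; lia)).
  assert (Hz : rsum (fun _ : nat => 0) M = 0) by (clear; induction M; simpl; lra).
  rewrite Hz, Rminus_0_r in Hm0. apply Rabs_def2 in Hm0.
  assert (Htri : rsum (fun j => Cmod (Cminus (l2_val (u k) j) (l j)) ^ 2) M <=
          rsum (fun j => 2 * Cmod (Cminus (l2_val (u k) j) (l2_val (u m) j)) ^ 2 +
                         2 * Cmod (Cminus (l2_val (u m) j) (l j)) ^ 2) M).
  { apply rsum_le. intros j _. apply Cmod_minus_sq_le. }
  rewrite rsum_plus, !rsum_scal in Htri.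
  pose proof (rsum_le_Series _ M (fun _ => pow2_ge_0 _) (ex_series_l2_dist k m)).
  unfold del in Hm0. lra.
Qed.

End L2Completeness.

Lemma l2_complete (u : nat -> l2_ModuleSpace) :
  (forall eps, 0 < eps -> exists N : nat, forall m n, (N <= m)%nat -> (N <= n)%nat ->
          sqrt (Re (l2_inner (minus (u m) (u n)) (minus (u m) (u n)))) < eps) ->
  exists l : l2_ModuleSpace, forall eps, 0 < eps -> exists N : nat, forall n, (N <= n)%nat ->
          sqrt (Re (l2_inner (minus (u n) l) (minus (u n) l))) < eps.
Proof.
  intro Hc.
  assert (Hc2 : forall eps, 0 < eps -> exists N, forall m n, (N <= m)%nat -> (N <= n)%nat ->
            Series (fun j => Cmod (Cminus (l2_val (u m) j) (l2_val (u n) j)) ^ 2) < eps ^ 2).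
  { intros eps He. destruct (Hc eps He) as [N HN]. exists N. intros m n Hm Hn.
    specialize (HN m n Hm Hn).
    rewrite <- (Series_ext (fun j => Cmod (l2_val (minus (u m) (u n)) j) ^ 2)).
    rewrite <- sqrt_l2_inner_sq. pose proof (sqrt_pos (Re (l2_inner (minus (u m) (u n)) (minus (u m) (u n))))).
    nra. intro j. rewrite l2_val_minus. auto. }
  destruct (l2_Cauchy_coord_lim u Hc2) as [l Hconv].
  pose proof (l2_Cauchy_tail_bound u Hc2 l Hconv) as Hbound.
  assert (Hl2 : is_l2 l).
  { destruct (Hbound 1) as [N HN]. lra.
    destruct (series_of_bounded_partial_sums (fun j => Cmod (Cminus (l2_val (u N) j) (l j)) ^ 2) (2 * 1 ^ 2))
      as [Hex _].
    intro; apply pow2_ge_0. intro M. apply HN. lia.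
    apply ex_series_R_le with (fun j => 2 * Cmod (Cminus (l2_val (u N) j) (l j)) ^ 2 + 2 * Cmod (l2_val (u N) j) ^ 2).
    intro j. split. apply pow2_ge_0.
    replace (l j) with (Cplus (Copp (Cminus (l2_val (u N) j) (l j))) (l2_val (u N) j)) at 1 by ring.
    eapply Rle_trans. apply Cmod_plus_sq. rewrite Cmod_opp. lra.
    apply ex_series_Rplus; apply ex_series_Rscal; auto. apply (proj2_sig (u N)). }
  exists (exist _ l Hl2 : l2_ModuleSpace).
  intros eps He. destruct (Hbound (eps / 2)) as [N HN]. lra.
  exists N. intros n Hn.
  set (x := minus (u n) (exist _ l Hl2 : l2_ModuleSpace)).
  assert (Hs : Series (fun j => Cmod (l2_val x j) ^ 2) <= 2 * (eps / 2) ^ 2).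
  { destruct (series_of_bounded_partial_sums (fun j => Cmod (l2_val x j) ^ 2) (2 * (eps / 2) ^ 2)) as [_ B].
    intro; apply pow2_ge_0. intro M. unfold x.
    rewrite (rsum_ext _ (fun j => Cmod (Cminus (l2_val (u n) j) (l j)) ^ 2)). apply HN; auto.
    intros j _. rewrite l2_val_minus. auto. auto. }
  rewrite <- sqrt_l2_inner_sq in Hs.
  pose proof (sqrt_pos (Re (l2_inner x x))).
  assert (sqrt (Re (l2_inner x x)) ^ 2 < eps ^ 2) by nra.
  nra.
Qed.

Definition l2_hilbert : Hilbert := {|
  hcar := l2_ModuleSpace;
  hinner := l2_inner;
  hinner_addl := l2_inner_addl;
  hinner_scall := l2_inner_scall;
  hinner_sym := l2_inner_sym;
  hinner_pos := l2_inner_pos;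
  hinner_def := l2_inner_def;
  hcomplete := l2_complete |}.

Lemma l2_hnorm_sq (x : l2_hilbert) : hnorm l2_hilbert x ^ 2 = Series (fun n => Cmod (l2_val x n) ^ 2).
Proof. unfold hnorm. apply sqrt_l2_inner_sq. Qed.

Definition rat_complex_seq (k : nat) : C := let (p, r) := Cantor.of_nat k in (rat_seq p, rat_seq r).

Lemma rat_complex_seq_dense (z : C) (eps : R) : 0 < eps -> exists k, Cmod (Cminus z (rat_complex_seq k)) < eps.
Proof.
  intro He. destruct (rat_seq_dense (Re z) (eps/2)) as [p Hp]. lra.
  destruct (rat_seq_dense (Im z) (eps/2)) as [r Hr]. lra.
  exists (Cantor.to_nat (p, r)). unfold rat_complex_seq. rewrite Cantor.cancel_of_to.
  eapply Rle_lt_trans. apply Cmod_le_Re_Im.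
  replace (Re (Cminus z (rat_seq p, rat_seq r))) with (- (rat_seq p - Re z)) by (unfold Re; destruct z; simpl; ring).
  replace (Im (Cminus z (rat_seq p, rat_seq r))) with (- (rat_seq r - Im z)) by (unfold Im; destruct z; simpl; ring).
  rewrite !Rabs_Ropp. lra.
Qed.

Fixpoint nat_decode (j m : nat) : nat :=
  match m with O => fst (Cantor.of_nat j) | S m => nat_decode (snd (Cantor.of_nat j)) m end.

Lemma nat_decode_surj N : forall c : nat -> nat, exists j, forall m, (m <= N)%nat -> nat_decode j m = c m.
Proof.
  induction N; intros c.
  - exists (Cantor.to_nat (c O, O)). intros m Hm. destruct m; [|lia]. cbn [nat_decode]. rewrite Cantor.cancel_of_to. auto.
  - destruct (IHN (fun m => c (S m))) as [j' Hj'].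
    exists (Cantor.to_nat (c O, j')). intros m Hm. destruct m; cbn [nat_decode]; rewrite Cantor.cancel_of_to; cbn [fst snd]; auto.
    apply Hj'. lia.
Qed.

Definition finite_rat_seq (k : nat) : nat -> C :=
  let (N, j) := Cantor.of_nat k in fun m => if Nat.leb m N then rat_complex_seq (nat_decode j m) else RtoC 0.

Lemma finite_rat_seq_l2 k : is_l2 (finite_rat_seq k).
Proof.
  unfold is_l2. unfold finite_rat_seq. destruct (Cantor.of_nat k) as [N j].
  set (f := fun m => Cmod (if Nat.leb m N then rat_complex_seq (nat_decode j m) else RtoC 0) ^ 2).
  assert (Hz : forall m, (S N <= m)%nat -> f m = 0).
  { intros m Hm. unfold f. replace (Nat.leb m N) with false by (symmetry; apply Nat.leb_gt; lia).
    rewrite Cmod_0. ring. }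
  destruct (series_of_bounded_partial_sums f (rsum f (S N))) as [A _]. intro; apply pow2_ge_0.
  intro M. destruct (Nat.le_ge_cases M (S N)) as [H|H].
  - apply rsum_mono; auto. intro; apply pow2_ge_0.
  - right. induction H as [|m Hm IH]; auto. change (rsum f (S m)) with (rsum f m + f m). rewrite IH, Hz by lia. ring.
  - exact A.
Qed.

Definition finite_rat_vec (k : nat) : l2_hilbert := exist _ (finite_rat_seq k) (finite_rat_seq_l2 k).

Lemma rsum_const_le (c : R) N M : 0 <= c ->
  rsum (fun m => if Nat.leb m N then c else 0) M <= INR (S N) * c.
Proof.
  intro Hc.
  assert (E : forall M, (M <= S N)%nat -> rsum (fun m => if Nat.leb m N then c else 0) M = INR M * c).
  { induction M0; intros HM. simpl. ring. change (rsum (fun m => if Nat.leb m N then c else 0) (S M0)) with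
      (rsum (fun m => if Nat.leb m N then c else 0) M0 + (if Nat.leb M0 N then c else 0)).
    rewrite IHM0 by lia. replace (Nat.leb M0 N) with true by (symmetry; apply Nat.leb_le; lia).
    rewrite S_INR. ring. }
  destruct (Nat.le_ge_cases M (S N)) as [H|H].
  - rewrite E by auto. apply Rmult_le_compat_r; auto. apply le_INR; auto.
  - rewrite <- (E (S N)) by auto. right. induction H as [|m Hm IH]; auto.
    change (rsum (fun m => if Nat.leb m N then c else 0) (S m)) with
      (rsum (fun m => if Nat.leb m N then c else 0) m + (if Nat.leb m N then c else 0)).
    rewrite IH. replace (Nat.leb m N) with false by (symmetry; apply Nat.leb_gt; lia). ring.
Qed.

Lemma rsum_truncation_error (x : nat -> C) (c : nat -> C) N eta M :
  (forall m, (m <= N)%nat -> Cmod (Cminus (x m) (c m)) <= eta) ->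
  rsum (fun m => Cmod (Cminus (x m) (if Nat.leb m N then c m else RtoC 0)) ^ 2) M <=
  INR (S N) * eta ^ 2 + rsum (fun m => if Nat.leb (S N) m then Cmod (x m) ^ 2 else 0) M.
Proof.
  intro Hc. eapply Rle_trans; [|apply Rplus_le_compat_r, (rsum_const_le (eta ^ 2) N M), pow2_ge_0].
  rewrite <- rsum_plus. apply rsum_le. intros m _. destruct (Nat.leb_spec m N).
  - replace (Nat.leb (S N) m) with false by (symmetry; apply Nat.leb_gt; lia).
    pose proof (Hc m H). pose proof (Cmod_ge_0 (Cminus (x m) (c m))).
    assert (Cmod (Cminus (x m) (c m)) ^ 2 <= eta ^ 2) by (apply pow_incr; lra). lra.
  - replace (Nat.leb (S N) m) with true by (symmetry; apply Nat.leb_le; lia).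
    replace (Cminus (x m) (RtoC 0)) with (x m) by ring. lra.
Qed.

Lemma l2_separable : separable l2_hilbert.
Proof.
  exists finite_rat_vec. intros x eps He.
  set (f := fun m => Cmod (l2_val x m) ^ 2).
  assert (Hf : forall m, 0 <= f m) by (intro; apply pow2_ge_0).
  assert (Hx : ex_series f) by apply (proj2_sig x).
  destruct (proj1 (is_series_R_eps f (Series f)) (Series_correct f Hx) (eps ^ 2 / 2)) as [N HN].
  { pose proof (pow_lt eps 2 He). lra. }
  specialize (HN N (le_n N)). rewrite sum_n_rsum in HN. apply Rabs_def2 in HN.
  assert (HSN : 0 < INR (S N)) by (apply lt_0_INR; lia).
  (* approximate the first N + 1 coordinates within eta, so that their error is eps^2 / 4 *)
  set (eta := eps / (2 * sqrt (INR (S N)))).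
  assert (Heta : 0 < eta)
    by (unfold eta; apply Rdiv_lt_0_compat; [lra| apply Rmult_lt_0_compat; [lra| apply sqrt_lt_R0; lra]]).
  assert (Heta2 : INR (S N) * eta ^ 2 = eps ^ 2 / 4).
  { unfold eta, Rdiv. rewrite Rpow_mult_distr, pow_inv, Rpow_mult_distr, pow2_sqrt by lra.
    field. lra. }
  assert (Hch : forall m, exists k, Cmod (Cminus (l2_val x m) (rat_complex_seq k)) < eta)
    by (intro; apply rat_complex_seq_dense; auto).
  set (cf := fun m => proj1_sig (constructive_indefinite_description _ (Hch m))).
  assert (Hcf : forall m, Cmod (Cminus (l2_val x m) (rat_complex_seq (cf m))) < eta)
    by (intro m; exact (proj2_sig (constructive_indefinite_description _ (Hch m)))).
  destruct (nat_decode_surj N cf) as [j Hj].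
  exists (Cantor.to_nat (N, j)).
  set (y := minus x (finite_rat_vec (Cantor.to_nat (N, j)))).
  assert (Hbd : forall M, rsum (fun m => Cmod (l2_val y m) ^ 2) M <= eps ^ 2 / 4 + (Series f - rsum f (S N))).
  { intro M. rewrite <- Heta2.
    rewrite (rsum_ext _ (fun m => Cmod (Cminus (l2_val x m)
      (if Nat.leb m N then rat_complex_seq (nat_decode j m) else RtoC 0)) ^ 2)).
    2:{ intros m _. unfold y. rewrite l2_val_minus.
        change (l2_val (finite_rat_vec (Cantor.to_nat (N, j))) m)
          with (finite_rat_seq (Cantor.to_nat (N, j)) m).
        unfold finite_rat_seq. rewrite Cantor.cancel_of_to. reflexivity. }
    eapply Rle_trans. apply rsum_truncation_error with (eta := eta).
    { intros m Hm. rewrite Hj by auto. left. apply Hcf. }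
    apply Rplus_le_compat_l. destruct (Nat.le_ge_cases (S N) M) as [HM|HM].
    - rewrite rsum_tail by auto. pose proof (rsum_le_Series f M Hf Hx). unfold f in *. lra.
    - rewrite (rsum_ext _ (fun _ => 0)).
      + assert (rsum (fun _ : nat => 0) M = 0) by (clear; induction M; simpl; lra).
        pose proof (rsum_le_Series f (S N) Hf Hx). lra.
      + intros m Hm. replace (Nat.leb (S N) m) with false by (symmetry; apply Nat.leb_gt; lia). auto. }
  destruct (series_of_bounded_partial_sums _ _ (fun m => pow2_ge_0 (Cmod (l2_val y m))) Hbd) as [_ HB].
  rewrite <- l2_hnorm_sq in HB.
  pose proof (hnorm_ge0 l2_hilbert y). fold y.
  assert (hnorm l2_hilbert y ^ 2 < eps ^ 2) by lra. nra.
Qed.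


(** * Borel maps into l^2 *)

Lemma borel2_ext (A B : R * R -> Prop) : (forall p, A p <-> B p) -> borel2 A -> borel2 B.
Proof.
  intros E HA. assert (A = B) by (apply functional_extensionality; intro p; apply propositional_extensionality; auto).
  subst; auto.
Qed.

Lemma borel2_empty : borel2 (fun _ => False).
Proof. intros S [Hempty _] _. auto. Qed.

Lemma borel2_compl A : borel2 A -> borel2 (fun p => ~ A p).
Proof. intros HA S HS HO. destruct HS as [Hempty [Hc Hu]]. apply Hc. apply HA; auto. split; auto. Qed.

Lemma borel2_union (A : nat -> R * R -> Prop) : (forall n, borel2 (A n)) -> borel2 (fun p => exists n, A n p).
Proof. intros HA S HS HO. destruct HS as [Hempty [Hc Hu]]. apply Hu. intro n. apply HA; auto. split; auto. Qed.

Lemma borel2_open (O : R * R -> Prop) : open O -> borel2 O.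
Proof. intros HO S _ HS. auto. Qed.

Lemma borel2_inter (A : nat -> R * R -> Prop) : (forall n, borel2 (A n)) -> borel2 (fun p => forall n, A n p).
Proof.
  intro HA. apply borel2_ext with (fun p => ~ exists n, ~ A n p).
  - intro p. split.
    + intros Hn n. apply NNPP. intro Hc. apply Hn. exists n. auto.
    + intros Ha [n Hn]. auto.
  - apply borel2_compl. apply borel2_union. intro n. apply borel2_compl. auto.
Qed.

Lemma borel2_le_continuous (G : R * R -> R) (c : R) : (forall p, continuous G p) -> borel2 (fun p => G p <= c).
Proof.
  intro HG. apply borel2_ext with (fun p => ~ (c < G p)).
  - intro p. split; intro; lra.
  - apply borel2_compl. apply borel2_open. apply (open_comp G (fun y => c < y)).
    intros; apply HG. apply open_gt.
Qed.

Lemma borel2_le_lim (Gk : nat -> R * R -> R) (F : R * R -> R) (c : R) :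
  (forall k p, continuous (Gk k) p) ->
  (forall p eps, 0 < eps -> exists K, forall k, (K <= k)%nat -> Rabs (Gk k p - F p) < eps) ->
  borel2 (fun p => F p <= c).
Proof.
  intros HG Hlim.
  apply borel2_ext with (fun p => forall i : nat, exists K : nat, forall n : nat,
    Gk (K + n)%nat p <= c + / INR (S i)).
  - intro p. split.
    + intro H. apply Rnot_lt_le. intro Hlt.
      destruct (inv_INR_S_lt (F p - c)) as [i Hi]. lra. specialize (Hi i (le_n i)).
      destruct (H i) as [K HK].
      destruct (Hlim p (F p - c - / INR (S i))) as [K2 HK2]. lra.
      specialize (HK K2). specialize (HK2 (K + K2)%nat ltac:(lia)).
      apply Rabs_def2 in HK2. lra.
    + intros H i. destruct (Hlim p (/ INR (S i))) as [K HK].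
      apply Rinv_0_lt_compat, lt_0_INR; lia.
      exists K. intro n. specialize (HK (K + n)%nat ltac:(lia)). apply Rabs_def2 in HK. lra.
  - apply borel2_inter. intro i. apply borel2_union. intro K. apply borel2_inter. intro n.
    apply borel2_le_continuous. auto.
Qed.


Section BorelL2.
Variable g : R * R -> l2_hilbert.
Variable g_approx : nat -> nat -> R * R -> C.
Hypothesis Hcont : forall m k p, continuous (fun p => Re (g_approx m k p)) p /\ continuous (fun p => Im (g_approx m k p)) p.
Hypothesis Hconv : forall m p eps, 0 < eps -> exists K, forall k, (K <= k)%nat ->
  Cmod (Cminus (g_approx m k p) (l2_val (g p) m)) < eps.

Lemma borel2_closed_ball_preimage (c : l2_hilbert) (r : R) : 0 <= r -> borel2 (fun p => hnorm l2_hilbert (minus (g p) c) <= r).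
Proof.
  intro Hr.
  apply borel2_ext with (fun p => forall N, rsum (fun m => Cmod (Cminus (l2_val (g p) m) (l2_val c m)) ^ 2) N <= r ^ 2).
  - intro p. assert (Eq : forall m, Cmod (l2_val (minus (g p) c) m) ^ 2 = Cmod (Cminus (l2_val (g p) m) (l2_val c m)) ^ 2).
    { intro. rewrite l2_val_minus. auto. }
    split.
    + intro H. destruct (series_of_bounded_partial_sums (fun m => Cmod (l2_val (minus (g p) c) m) ^ 2) (r ^ 2)) as [_ B].
      intro; apply pow2_ge_0. intro N. rewrite (rsum_ext _ (fun m => Cmod (Cminus (l2_val (g p) m) (l2_val c m)) ^ 2)); auto.
      rewrite <- l2_hnorm_sq in B. pose proof (hnorm_ge0 l2_hilbert (minus (g p) c)).
      apply Rsqr_incr_0_var; auto. unfold Rsqr. nra.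
    + intros H N. rewrite <- (rsum_ext (fun m => Cmod (l2_val (minus (g p) c) m) ^ 2)) by auto.
      eapply Rle_trans. apply rsum_le_Series. intro; apply pow2_ge_0. apply (proj2_sig (minus (g p) c)).
      rewrite <- l2_hnorm_sq. pose proof (hnorm_ge0 l2_hilbert (minus (g p) c)). apply pow_incr. lra.
  - apply borel2_inter. intro N.
    apply (borel2_le_lim (fun k p => rsum (fun m => Cmod (Cminus (g_approx m k p) (l2_val c m)) ^ 2) N)).
    + intros k p. apply (continuous_rsum (fun m p => Cmod (Cminus (g_approx m k p) (l2_val c m)) ^ 2)).
      intro m. apply continuous_ext with (fun p => (Re (g_approx m k p) - Re (l2_val c m)) ^ 2 + (Im (g_approx m k p) - Im (l2_val c m)) ^ 2).
      { intro y. rewrite Cmod2_alt. unfold Re, Im. simpl. ring. }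
      destruct (Hcont m k p) as [C1 C2]. simpl.
      apply continuous_Rplus; apply continuous_Rmult;
        try (apply continuous_Rmult; [|apply continuous_const]);
        apply continuous_Rminus; first [exact C1 | exact C2 | apply continuous_const].
    + intros p eps He. apply (rsum_cvg (fun k m => Cmod (Cminus (g_approx m k p) (l2_val c m)) ^ 2)
        (fun m => Cmod (Cminus (l2_val (g p) m) (l2_val c m)) ^ 2)); auto.
      intros m _ e He'. apply (Cmod_minus_sq_cvg (fun k => g_approx m k p)). intros. apply Hconv; auto. auto.
Qed.

Lemma borel_fun_of_coord_lim : borel_fun l2_hilbert g.
Proof.
  intros O HO. destruct l2_separable as [D HD].
  (* O is the countable union of the closed balls B(D k, 1/(i+1)) that it contains *)
  set (Cond := fun k i => forall y : l2_hilbert, hnorm l2_hilbert (minus y (D k)) <= / INR (S i) -> O y).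
  set (A := fun n p => let (k, i) := Cantor.of_nat n in
                       Cond k i /\ hnorm l2_hilbert (minus (g p) (D k)) <= / INR (S i)).
  apply borel2_ext with (fun p => exists n, A n p).
  - intro p. split.
    + intros [n Hn]. unfold A in Hn. destruct (Cantor.of_nat n) as [k i]. destruct Hn as [Hc Hb].
      apply Hc. auto.
    + intro Hp. destruct (HO _ Hp) as [eps [He Hball]].
      destruct (inv_INR_S_lt (eps / 2)) as [i Hi]. lra. specialize (Hi i (le_n i)).
      assert (Hpos : 0 < / INR (S i)) by (apply Rinv_0_lt_compat, lt_0_INR; lia).
      destruct (HD (g p) _ Hpos) as [k Hk].
      exists (Cantor.to_nat (k, i)). unfold A. rewrite Cantor.cancel_of_to. split.
      * intros y Hy. apply Hball. eapply Rle_lt_trans. apply (hnorm_minus_triangle l2_hilbert y (D k) (g p)).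
        rewrite (hnorm_minus_sym l2_hilbert (D k) (g p)). lra.
      * lra.
  - apply borel2_union. intro n. unfold A. destruct (Cantor.of_nat n) as [k i].
    destruct (classic (Cond k i)) as [Hc|Hc].
    + apply borel2_ext with (fun p => hnorm l2_hilbert (minus (g p) (D k)) <= / INR (S i)).
      intro p. tauto. apply borel2_closed_ball_preimage. left. apply Rinv_0_lt_compat, lt_0_INR; lia.
    + apply borel2_ext with (fun _ => False). intro p. tauto. apply borel2_empty.
Qed.

End BorelL2.

Lemma is_series_Re (a : nat -> C) (l : C) : is_series a l -> is_series (fun n => Re (a n)) (Re l).
Proof.
  intro Hs. apply is_series_R_eps. intros eps He. destruct (proj1 (is_series_C_eps a l) Hs eps He) as [N HN].
  exists N. intros n Hn. specialize (HN n Hn). rewrite sum_n_rsum, <- csum_re, <- sum_n_csum.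
  eapply Rle_lt_trans. 2: exact HN.
  replace (Re (sum_n a n) - Re l) with (Re (Cminus (sum_n a n) l)) by (unfold Re; simpl; ring).
  apply re_le_Cmod.
Qed.

Lemma is_series_Im (a : nat -> C) (l : C) : is_series a l -> is_series (fun n => Im (a n)) (Im l).
Proof.
  intro Hs. apply is_series_R_eps. intros eps He. destruct (proj1 (is_series_C_eps a l) Hs eps He) as [N HN].
  exists N. intros n Hn. specialize (HN n Hn). rewrite sum_n_rsum, <- csum_im, <- sum_n_csum.
  eapply Rle_lt_trans. 2: exact HN.
  replace (Im (sum_n a n) - Im l) with (Im (Cminus (sum_n a n) l)) by (unfold Im; simpl; ring).
  apply Im_le_Cmod.
Qed.

Lemma continuous_Re (g : R -> C) x : continuous g x -> continuous (fun y => Re (g y)) x.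
Proof.
  intro Hc. apply continuous_R_eps. intros eps He. destruct (proj1 (continuous_C_eps g x) Hc eps He) as [d [Hd Hy]].
  exists d. split; auto. intros y Hyd. specialize (Hy y Hyd). eapply Rle_lt_trans. 2: exact Hy.
  replace (Re (g y) - Re (g x)) with (Re (Cminus (g y) (g x))) by (unfold Re; simpl; ring). apply re_le_Cmod.
Qed.
Lemma continuous_Im (g : R -> C) x : continuous g x -> continuous (fun y => Im (g y)) x.
Proof.
  intro Hc. apply continuous_R_eps. intros eps He. destruct (proj1 (continuous_C_eps g x) Hc eps He) as [d [Hd Hy]].
  exists d. split; auto. intros y Hyd. specialize (Hy y Hyd). eapply Rle_lt_trans. 2: exact Hy.
  replace (Im (g y) - Im (g x)) with (Im (Cminus (g y) (g x))) by (unfold Im; simpl; ring). apply Im_le_Cmod.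
Qed.

Lemma continuous_comp_fst (h : R -> R) (p : R * R) : continuous h (fst p) -> continuous (fun q : R * R => h (fst q)) p.
Proof.
  intro Hh. destruct p as [x y]. apply (continuous_comp fst h). apply continuous_fst. exact Hh.
Qed.
Lemma continuous_comp_snd (h : R -> R) (p : R * R) : continuous h (snd p) -> continuous (fun q : R * R => h (snd q)) p.
Proof.
  intro Hh. destruct p as [x y]. apply (continuous_comp snd h). apply continuous_snd. exact Hh.
Qed.

Lemma is_l2_of_bounded (x : nat -> C) (B : R) : (forall N, sum_n (fun m => Cmod (x m) ^ 2) N <= B) ->
  is_l2 x /\ Series (fun m => Cmod (x m) ^ 2) <= B.
Proof.
  intro Hb. apply series_of_bounded_partial_sums. intro; apply pow2_ge_0.
  intros [|M].
  - simpl. pose proof (pow2_ge_0 (Cmod (x O))). pose proof (Hb O) as Hb0.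
    rewrite sum_n_rsum in Hb0. simpl in Hb0. lra.
  - rewrite <- sum_n_rsum. auto.
Qed.


(** * Separable Borel factorization of f^[2] *)

Lemma in_h3dual_normalize (phi : R -> R -> R -> C) : in_h3dual phi ->
  exists (K : R) (E F : Hilbert) (alpha : R -> E) (theta : R -> F -> E) (beta : R -> F),
    0 < K /\ (forall t, Clinear F E (theta t)) /\
    (forall s, hnorm E (alpha s) <= 1) /\
    (forall t (x : F), hnorm E (theta t x) <= hnorm F x) /\
    (forall u, hnorm F (beta u) <= 1) /\
    (forall s t u, phi s t u = Cmult (RtoC K) (hinner E (alpha s) (theta t (beta u)))).
Proof.
  intros [E [F [alpha [theta [beta [Hlin [[c1 Hc1] [[c2 Hc2] [[c3 Hc3] Hrep]]]]]]]]].
  set (k1 := Rmax c1 1). set (k2 := Rmax c2 1). set (k3 := Rmax c3 1).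
  assert (Hk1 : 1 <= k1) by apply Rmax_r. assert (Hk2 : 1 <= k2) by apply Rmax_r.
  assert (Hk3 : 1 <= k3) by apply Rmax_r.
  assert (Hc1' : c1 <= k1) by apply Rmax_l. assert (Hc2' : c2 <= k2) by apply Rmax_l.
  assert (Hc3' : c3 <= k3) by apply Rmax_l.
  assert (Hinv : forall k, 1 <= k -> Cmod (RtoC (/ k)) = / k).
  { intros k Hk. rewrite Cmod_R, Rabs_right. auto. apply Rle_ge, Rlt_le, Rinv_0_lt_compat. lra. }
  exists (k1 * k2 * k3), E, F, (fun s => scal (RtoC (/ k1)) (alpha s)),
    (fun t (x : F) => scal (RtoC (/ k2)) (theta t x)), (fun u => scal (RtoC (/ k3)) (beta u)).
  repeat split.
  - apply Rmult_lt_0_compat; [apply Rmult_lt_0_compat|]; lra.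
  - intros x y. destruct (Hlin t) as [La _]. rewrite La. apply hscal_distr_l.
  - intros c x. destruct (Hlin t) as [_ Ls]. rewrite Ls, !hscal_assoc. f_equal. apply Cmult_comm.
  - intro s. rewrite hnorm_scal, Hinv by auto. pose proof (Hc1 s).
    apply Rmult_le_reg_l with k1. lra. rewrite <- Rmult_assoc, Rinv_r, Rmult_1_l by lra. lra.
  - intros t x. rewrite hnorm_scal, Hinv by auto. pose proof (Hc2 t x). pose proof (hnorm_ge0 F x).
    apply Rmult_le_reg_l with k2. lra. rewrite <- Rmult_assoc, Rinv_r, Rmult_1_l by lra. nra.
  - intro u. rewrite hnorm_scal, Hinv by auto. pose proof (Hc3 u).
    apply Rmult_le_reg_l with k3. lra. rewrite <- Rmult_assoc, Rinv_r, Rmult_1_l by lra. lra.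
  - intros s t u. destruct (Hlin t) as [_ Ls]. rewrite Ls, hinner_scall, !hinner_scalr, <- Hrep.
    assert (Cc : forall r, Cconj (RtoC r) = RtoC r) by (intro; apply injective_projections; simpl; ring).
    rewrite !Cc, !Cmult_assoc, <- !RtoC_mult.
    replace (k1 * k2 * k3 * / k1 * / k2 * / k3) with 1 by (field; lra). ring.
Qed.

Lemma sep_continuous_scal (c : C) (phi : R -> R -> R -> C) : sep_continuous phi ->
  sep_continuous (fun s t u => Cmult c (phi s t u)).
Proof.
  intros [A1 [A2 A3]]. split; [|split]; intros;
    apply continuous_Cmult; try apply continuous_const; auto.
Qed.

Definition separable_borel_factorization (g : R -> R -> R -> C) : Prop :=
  exists (H : Hilbert) (a b : R * R -> H),
    separable H /\
    (exists c, forall p, hnorm H (a p) <= c) /\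
    (exists c, forall p, hnorm H (b p) <= c) /\
    borel_fun H a /\ borel_fun H b /\
    (forall s t u, g s t u = hinner H (a (s, t)) (b (t, u))).

Lemma continuous_Re_Im_comp_fst (h : R -> C) p : (forall s, continuous h s) ->
  continuous (fun p : R * R => Re (h (fst p))) p /\ continuous (fun p : R * R => Im (h (fst p))) p.
Proof.
  intro Hh. split.
  - apply (continuous_comp_fst (fun s => Re (h s))), continuous_Re, Hh.
  - apply (continuous_comp_fst (fun s => Im (h s))), continuous_Im, Hh.
Qed.

Lemma continuous_Re_Im_matrix_sum (th : nat -> R -> C) (b : nat -> R -> C) k p :
  (forall n t, continuous (th n) t) -> (forall n u, continuous (b n) u) ->
  continuous (fun p : R * R => Re (csum (fun n => Cmult (th n (fst p)) (b n (snd p))) k)) p /\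
  continuous (fun p : R * R => Im (csum (fun n => Cmult (th n (fst p)) (b n (snd p))) k)) p.
Proof.
  intros Cth Cb.
  assert (Hs : forall (h : R -> C), (forall u, continuous h u) ->
    continuous (fun p : R * R => Re (h (snd p))) p /\ continuous (fun p : R * R => Im (h (snd p))) p).
  { intros h Hh. split.
    - apply (continuous_comp_snd (fun s => Re (h s))), continuous_Re, Hh.
    - apply (continuous_comp_snd (fun s => Im (h s))), continuous_Im, Hh. }
  split.
  - apply continuous_ext with (fun p => rsum (fun n => Re (th n (fst p)) * Re (b n (snd p)) -
                                                      Im (th n (fst p)) * Im (b n (snd p))) k).
    { intro q. rewrite csum_re. apply rsum_ext. intros. unfold Re, Im. simpl. ring. }
    apply (continuous_rsum (fun n p => Re (th n (fst p)) * Re (b n (snd p)) -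
                                       Im (th n (fst p)) * Im (b n (snd p)))).
    intro n. destruct (continuous_Re_Im_comp_fst (th n) p (Cth n)), (Hs (b n) (Cb n)).
    apply continuous_Rminus; apply continuous_Rmult; auto.
  - apply continuous_ext with (fun p => rsum (fun n => Re (th n (fst p)) * Im (b n (snd p)) +
                                                      Im (th n (fst p)) * Re (b n (snd p))) k).
    { intro q. rewrite csum_im. apply rsum_ext. intros. unfold Re, Im. simpl. ring. }
    apply (continuous_rsum (fun n p => Re (th n (fst p)) * Im (b n (snd p)) +
                                       Im (th n (fst p)) * Re (b n (snd p)))).
    intro n. destruct (continuous_Re_Im_comp_fst (th n) p (Cth n)), (Hs (b n) (Cb n)).
    apply continuous_Rplus; apply continuous_Rmult; auto.
Qed.

Section L2Vectors.
Variables (g : R -> R -> R -> C) (K : R) (a : nat -> R -> C) (th : nat -> nat -> R -> C)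
  (b : nat -> R -> C).
Hypotheses (HK : 0 < K) (Ca : forall m s, continuous (a m) s) (Cth : forall m n t, continuous (th m n) t)
  (Cb : forall n u, continuous (b n) u)
  (Sa : forall s N, sum_n (fun m => (Cmod (a m s))^2) N <= 1)
  (Sb : forall u N, sum_n (fun n => (Cmod (b n u))^2) N <= 1)
  (Hcontr : forall t, l2_contraction (fun m n => th m n t))
  (Hser : forall s t u, exists y : nat -> C,
     (forall m, is_series (fun n => Cmult (th m n t) (b n u)) (y m)) /\
     is_series (fun m => Cmult (a m s) (Cconj (y m))) (g s t u)).

Lemma is_l2_scaled_a s : is_l2 (fun m => Cmult (RtoC K) (a m s)) /\
  Series (fun m => Cmod (Cmult (RtoC K) (a m s)) ^ 2) <= K ^ 2.
Proof.
  apply is_l2_of_bounded. intro N. rewrite sum_n_rsum.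
  rewrite (rsum_ext _ (fun m => K ^ 2 * Cmod (a m s) ^ 2)).
  2:{ intros m _. rewrite Cmod_mult, Cmod_R, Rabs_right by lra. ring. }
  rewrite rsum_scal. pose proof (Sa s N) as Q. rewrite sum_n_rsum in Q. pose proof (pow2_ge_0 K). nra.
Qed.

Lemma is_l2_b u : is_l2 (fun n => b n u) /\ Series (fun n => Cmod (b n u) ^ 2) <= 1.
Proof. apply is_l2_of_bounded, Sb. Qed.

Definition a_vec (s : R) : l2_hilbert := exist _ _ (proj1 (is_l2_scaled_a s)).

Lemma matrix_image t u : {y : nat -> C | (forall m, is_series (fun n => Cmult (th m n t) (b n u)) (y m)) /\
  ex_series (fun m => (Cmod (y m))^2) /\
  Series (fun m => (Cmod (y m))^2) <= Series (fun n => (Cmod (b n u))^2)}.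
Proof. apply constructive_indefinite_description, Hcontr, is_l2_b. Qed.

Definition b_vec (t u : R) : l2_hilbert :=
  exist _ (proj1_sig (matrix_image t u)) (proj1 (proj2 (proj2_sig (matrix_image t u)))).

Lemma separable_borel_factorization_of_l2_factorization :
  separable_borel_factorization (fun s t u => Cmult (RtoC K) (g s t u)).
Proof.
  exists l2_hilbert, (fun p => a_vec (fst p)), (fun p => b_vec (fst p) (snd p)).
  split; [|split; [|split; [|split; [|split]]]].
  - apply l2_separable.
  - exists K. intro p. pose proof (hnorm_ge0 l2_hilbert (a_vec (fst p))).
    assert (hnorm l2_hilbert (a_vec (fst p)) ^ 2 <= K ^ 2)
      by (rewrite l2_hnorm_sq; apply (proj2 (is_l2_scaled_a (fst p)))).
    nra.
  - exists 1. intro p. pose proof (hnorm_ge0 l2_hilbert (b_vec (fst p) (snd p))).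
    assert (hnorm l2_hilbert (b_vec (fst p) (snd p)) ^ 2 <= 1).
    { rewrite l2_hnorm_sq. destruct (proj2_sig (matrix_image (fst p) (snd p))) as [_ [_ Q]].
      eapply Rle_trans; [exact Q | apply (proj2 (is_l2_b (snd p)))]. }
    nra.
  - apply (borel_fun_of_coord_lim _ (fun m k p => Cmult (RtoC K) (a m (fst p)))).
    + intros m k p. apply (continuous_Re_Im_comp_fst (fun s => Cmult (RtoC K) (a m s))). intro s.
      apply continuous_Cmult. apply continuous_const. apply Ca.
    + intros m p eps He. exists O. intros k _. simpl.
      replace (Cminus (Cmult (RtoC K) (a m (fst p))) (Cmult (RtoC K) (a m (fst p)))) with (RtoC 0) by ring.
      rewrite Cmod_0. auto.
  - apply (borel_fun_of_coord_lim _ (fun m k p => csum (fun n => Cmult (th m n (fst p)) (b n (snd p))) (S k))).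
    + intros m k p. apply (continuous_Re_Im_matrix_sum (th m)); auto.
    + intros m p eps He. destruct (proj2_sig (matrix_image (fst p) (snd p))) as [Hs _].
      destruct (proj1 (is_series_C_eps _ _) (Hs m) eps He) as [N HN]. exists N. intros k Hk.
      specialize (HN k Hk). rewrite sum_n_csum in HN. exact HN.
  - intros s t u. simpl.
    destruct (Hser s t u) as [y [Hy1 Hy2]].
    destruct (proj2_sig (matrix_image t u)) as [HY _].
    assert (Ey : forall m, y m = proj1_sig (matrix_image t u) m)
      by (intro m; exact (filterlim_locally_unique _ _ _ (Hy1 m) (HY m))).
    assert (Hz : is_series (fun m => Cmult (RtoC K) (Cmult (a m s) (Cconj (proj1_sig (matrix_image t u) m))))
                   (Cmult (RtoC K) (g s t u))).
    { apply (is_series_scal_l (K:=C_AbsRing) (V:=C_NormedModule)). eapply is_series_ext. 2: exact Hy2. intro m. simpl. rewrite Ey. auto. }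
    unfold l2_inner. apply injective_projections; simpl.
    + symmetry. apply is_series_unique. eapply is_series_ext. 2: apply (is_series_Re _ _ Hz).
      intro m. unfold l2_prod, l2_val. simpl. unfold Re, Im; simpl; ring.
    + symmetry. apply is_series_unique. eapply is_series_ext. 2: apply (is_series_Im _ _ Hz).
      intro m. unfold l2_prod, l2_val. simpl. unfold Re, Im; simpl; ring.
Qed.

End L2Vectors.

Theorem separable_borel_factorization_dd2 (f : R -> C) :
  C2C f -> in_h3dual (dd2 f) -> separable_borel_factorization (dd2 f).
Proof.
  intros Hf Hdual.
  destruct (in_h3dual_normalize (dd2 f) Hdual)
    as [K [E [F [alpha [theta [beta [HK [Hlin [Ha [Ht [Hb Hrep]]]]]]]]]]].
  set (phi := fun s t u => Cmult (RtoC (/ K)) (dd2 f s t u)).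
  assert (Hphi : forall s t u, phi s t u = hinner E (alpha s) (theta t (beta u))).
  { intros s t u. unfold phi. rewrite Hrep, Cmult_assoc, <- RtoC_mult, Rinv_l by lra. ring. }
  assert (Hsc : sep_continuous phi) by apply sep_continuous_scal, sep_continuous_dd2, Hf.
  destruct (continuous_l2_factorization_of_sep_continuous phi E F alpha theta beta Hsc Hlin Ha Ht Hb Hphi)
    as [a [th [b [Ca [Cth [Cb [Sa [Sb [Hcontr Hser]]]]]]]]].
  destruct (separable_borel_factorization_of_l2_factorization phi K a th b HK Ca Cth Cb Sa Sb Hcontr Hser)
    as [H [av [bv [Hsep [Hba [Hbb [Hbora [Hborb Heq]]]]]]]].
  exists H, av, bv. repeat split; auto.
  intros s t u. rewrite <- Heq. unfold phi.
  rewrite Cmult_assoc, <- RtoC_mult, Rinv_r by lra. ring.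
Qed.

Theorem proposition5p6 :
  (forall (phi : R -> R -> R -> C) (E F : Hilbert)
          (alpha : R -> E) (theta : R -> F -> E) (beta : R -> F),
      sep_continuous phi ->
      (forall t, Clinear F E (theta t)) ->
      (forall s, hnorm E (alpha s) <= 1) ->
      (forall t (x : F), hnorm E (theta t x) <= hnorm F x) ->
      (forall u, hnorm F (beta u) <= 1) ->
      (forall s t u, phi s t u = hinner E (alpha s) (theta t (beta u))) ->
      exists (a : nat -> R -> C) (th : nat -> nat -> R -> C) (b : nat -> R -> C),
        (forall m s, continuous (a m) s) /\
        (forall m n t, continuous (th m n) t) /\
        (forall n u, continuous (b n) u) /\
        (forall s N, sum_n (fun m => (Cmod (a m s))^2) N <= 1) /\
        (forall u N, sum_n (fun n => (Cmod (b n u))^2) N <= 1) /\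
        (forall t, l2_contraction (fun m n => th m n t)) /\
        (forall s t u, exists y : nat -> C,
            (forall m, is_series (fun n => Cmult (th m n t) (b n u)) (y m)) /\
            is_series (fun m => Cmult (a m s) (Cconj (y m))) (phi s t u)))
  /\
  (forall f : R -> C,
      C2C f ->
      in_h3dual (dd2 f) ->
      exists (H : Hilbert) (a b : R * R -> H),
        separable H /\
        (exists c, forall p, hnorm H (a p) <= c) /\
        (exists c, forall p, hnorm H (b p) <= c) /\
        borel_fun H a /\ borel_fun H b /\
        (forall s t u, dd2 f s t u = hinner H (a (s, t)) (b (t, u)))).
Proof.
  split.
  - exact continuous_l2_factorization_of_sep_continuous.
  - exact separable_borel_factorization_dd2.
Qed.
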